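(* Assume $\mathcal R_0>1$ and let $$\lambda>\frac{\big(\beta_E\nu\nu_E-(\nu_E+\delta_E)\delta_F\big)\delta_s}{\gamma_s(\nu_E+\delta_E)\delta_F}.$$ Then $\mathcal M:=\mathcal M(\overline\kappa)$ is positively invariant and $\mathbf 0$ is globally asymptotically stable in $\mathcal M$ (in the Filippov sense) for the closed-loop system $$\dot E=\beta_E F\Big(1-\frac EK\Big)-(\nu_E+\delta_E)E,\quad \dot M=(1-\nu)\nu_E E-\delta_M M,\quad \dot F=\nu\nu_E E\frac{M}{M+\gamma_sM_s}-\delta_F F,\quad \dot M_s=\lambda M-\delta_sM_s.$$
   Context: Parameters: $\beta_E,\nu_E,\delta_E,\delta_M,\delta_F,\delta_s,K>0$, $\nu\in(0,1)$, $\gamma_s\in(0,1]$, $\delta_s\ge\delta_M$. $\mathcal R_0:=\dfrac{\beta_E\nu\nu_E}{\delta_F(\nu_E+\delta_E)}$. $\mathcal D'=[0,+\infty)^4$, $z=(E,M,F,M_s)^T$. $\overline\kappa:=\dfrac{\gamma_s\delta_F(\nu_E+\delta_E)}{\beta_E\nu\nu_E-\delta_F(\nu_E+\delta_E)}$. $\mathcal T_1=\{z\in\mathcal D':\beta_EF(1-E/K)\le(\nu_E+\delta_E)E\}$, $\mathcal T_2(\kappa)=\{z\in\mathcal D':M\le\kappa M_s\}$, $\mathcal T_3=\{z\in\mathcal D':(1-\nu)\nu_EE\le\delta_MM\}$, $\mathcal M(\kappa)=\mathcal T_1\cap\mathcal T_2(\kappa)\cap\mathcal T_3$. Filippov solutions: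 locally Lipschitz $z:I\to\mathcal D'$ with $\dot z(t)\in\bigcap_{\varepsilon>0}\bigcap_{N}\overline{\mathrm{conv}}\,X\big(((z(t)+\varepsilon B)\cap\mathcal D')\setminus N\big)$ for a.e. $t$ ($X$ the closed-loop right-hand side, $B$ unit ball of $\mathbb R^4$, $N$ Lebesgue-null). Globally asymptotically stable in $\mathcal S$: for every $\varepsilon>0$ there is $\delta>0$ such that every Filippov solution with $z(0)\in\mathcal S$, $\|z(0)\|<\delta$ satisfies $\|z(t)\|<\varepsilon$ for all $t>0$, and every Filippov solution with $z(0)\in\mathcal S$ tends to $\mathbf 0$. *)

From Stdlib Require Import Reals Lra.
Open Scope R_scope.

Record vec4 := mkv { cE : R; cM : R; cF : R; cMs : R }.

Definition vsub (x y : vec4) : vec4 :=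
  mkv (cE x - cE y) (cM x - cM y) (cF x - cF y) (cMs x - cMs y).

Definition vnorm (x : vec4) : R :=
  sqrt (cE x ^ 2 + cM x ^ 2 + cF x ^ 2 + cMs x ^ 2).

Definition in_D' (z : vec4) : Prop :=
  0 <= cE z /\ 0 <= cM z /\ 0 <= cF z /\ 0 <= cMs z.

(** Where M + gammas*Ms = 0 (a Lebesgue-null subset of D') the value is
    whatever Stdlib's total division gives; it is irrelevant for Filippov
    solutions since null sets are discarded. *)
Definition Xcl (betaE nuE deltaE deltaM deltaF deltas K nu gammas lambda : R)
  (z : vec4) : vec4 :=
  let E := cE z in let M := cM z in let F := cF z in let Ms := cMs z in
  mkv (betaE * F * (1 - E / K) - (nuE + deltaE) * E)
      ((1 - nu) * nuE * E - deltaM * M)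
      (nu * nuE * E * (M / (M + gammas * Ms)) - deltaF * F)
      (lambda * M - deltas * Ms).

(** Lebesgue-null sets of R^4: coverable by countably many closed boxes of
    arbitrarily small total volume. *)
Definition in_box (a b z : vec4) : Prop :=
  cE a <= cE z <= cE b /\ cM a <= cM z <= cM b /\
  cF a <= cF z <= cF b /\ cMs a <= cMs z <= cMs b.

Definition box_vol (a b : vec4) : R :=
  (cE b - cE a) * (cM b - cM a) * (cF b - cF a) * (cMs b - cMs a).

Definition null4 (N : vec4 -> Prop) : Prop :=
  forall eps, 0 < eps ->
  exists a b : nat -> vec4,
    (forall k, cE (a k) <= cE (b k) /\ cM (a k) <= cM (b k) /\
               cF (a k) <= cF (b k) /\ cMs (a k) <= cMs (b k)) /\
    (forall z, N z -> exists k, in_box (a k) (b k) z) /\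
    (forall n, sum_f_R0 (fun k => box_vol (a k) (b k)) n <= eps).

Definition null1 (N : R -> Prop) : Prop :=
  forall eps, 0 < eps ->
  exists a b : nat -> R,
    (forall k, a k <= b k) /\
    (forall t, N t -> exists k, a k <= t <= b k) /\
    (forall n, sum_f_R0 (fun k => b k - a k) n <= eps).

Definition conv (S : vec4 -> Prop) (x : vec4) : Prop :=
  exists (n : nat) (w : nat -> R) (p : nat -> vec4),
    (forall i, (i <= n)%nat -> 0 <= w i /\ S (p i)) /\
    sum_f_R0 w n = 1 /\
    cE x = sum_f_R0 (fun i => w i * cE (p i)) n /\
    cM x = sum_f_R0 (fun i => w i * cM (p i)) n /\
    cF x = sum_f_R0 (fun i => w i * cF (p i)) n /\
    cMs x = sum_f_R0 (fun i => w i * cMs (p i)) n.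

Definition closure4 (S : vec4 -> Prop) (x : vec4) : Prop :=
  forall d, 0 < d -> exists y, S y /\ vnorm (vsub x y) < d.

Definition filippov_set (X : vec4 -> vec4) (z : vec4) (v : vec4) : Prop :=
  forall eps, 0 < eps -> forall N : vec4 -> Prop, null4 N ->
    closure4 (conv (fun y => exists w, vnorm (vsub w z) <= eps /\ in_D' w /\
                                       ~ N w /\ y = X w)) v.

(** Time domain [0, T) with T = Some T (T > 0) or [0, +oo) with None. *)
Definition in_dom (Tmax : option R) (t : R) : Prop :=
  0 <= t /\ match Tmax with Some T => t < T | None => True end.

Definition has_deriv4 (z : R -> vec4) (t : R) (v : vec4) : Prop :=
  derivable_pt_lim (fun s => cE (z s)) t (cE v) /\
  derivable_pt_lim (fun s => cM (z s)) t (cM v) /\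
  derivable_pt_lim (fun s => cF (z s)) t (cF v) /\
  derivable_pt_lim (fun s => cMs (z s)) t (cMs v).

Definition filippov_sol (X : vec4 -> vec4) (Tmax : option R) (z : R -> vec4)
  : Prop :=
  (match Tmax with Some T => 0 < T | None => True end) /\
  (forall t, in_dom Tmax t -> in_D' (z t)) /\
  (forall b, in_dom Tmax b -> exists L, forall s t,
      0 <= s <= b -> 0 <= t <= b ->
      vnorm (vsub (z s) (z t)) <= L * Rabs (s - t)) /\
  (exists Nt, null1 Nt /\ forall t, 0 < t -> in_dom Tmax t -> ~ Nt t ->
      exists v, has_deriv4 z t v /\ filippov_set X (z t) v).

Definition pos_invariant (X : vec4 -> vec4) (S : vec4 -> Prop) : Prop :=
  forall Tmax z, filippov_sol X Tmax z -> S (z 0) ->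
    forall t, in_dom Tmax t -> S (z t).

Definition GAS_in (X : vec4 -> vec4) (S : vec4 -> Prop) : Prop :=
  (forall eps, 0 < eps -> exists d, 0 < d /\
     forall Tmax z, filippov_sol X Tmax z -> S (z 0) -> vnorm (z 0) < d ->
       forall t, 0 < t -> in_dom Tmax t -> vnorm (z t) < eps) /\
  (forall z, filippov_sol X None z -> S (z 0) ->
     forall eps, 0 < eps -> exists T, forall t, T <= t -> vnorm (z t) < eps).

Definition T1set (betaE nuE deltaE K : R) (z : vec4) : Prop :=
  in_D' z /\ betaE * cF z * (1 - cE z / K) <= (nuE + deltaE) * cE z.
Definition T2set (kappa : R) (z : vec4) : Prop :=
  in_D' z /\ cM z <= kappa * cMs z.
Definition T3set (nu nuE deltaM : R) (z : vec4) : Prop :=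
  in_D' z /\ (1 - nu) * nuE * cE z <= deltaM * cM z.
Definition Mset (betaE nuE deltaE deltaM K nu kappa : R) (z : vec4) : Prop :=
  T1set betaE nuE deltaE K z /\ T2set kappa z /\ T3set nu nuE deltaM z.

Definition calR0 (betaE nuE deltaE deltaF nu : R) : R :=
  betaE * nu * nuE / (deltaF * (nuE + deltaE)).

Definition kappa_bar (betaE nuE deltaE deltaF nu gammas : R) : R :=
  gammas * deltaF * (nuE + deltaE) /
  (betaE * nu * nuE - deltaF * (nuE + deltaE)).

From Stdlib Require Import Reals Lra Lia Psatz Classical FunctionalExtensionality.
Local Set Warnings "-ambiguous-paths".
From Coquelicot Require Import Rbar Lim_seq.
Open Scope R_scope.

(** The invariant set [M(kappa_bar)] is {E' <= 0, M <= kappa Ms,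
    M' <= 0} inside [D'].  The squared positive parts of these three defects
    add up to a function [lyap] that vanishes exactly on the set and satisfies
    [lyap' <= C lyap] along every Filippov solution; by Grönwall it stays zero,
    which is positive invariance.  Inside the set [E] and [M] are
    nonincreasing, [Ms] is bounded by its initial data and [F] by [E]; this
    gives stability.  For attractivity, a positive limit of [E] would keep the
    mating ratio [M / (M + g Ms)] eventually below the replacement threshold
    [kappa / (kappa + g)] (this is where [lambda] is large enough), forcing a
    uniform decrease of [E]; hence [E -> 0], and [M], [Ms], [F] follow. *)

(** Stdlib states the sum/product rules for [(f + g)%F]; these restatements
    for [fun s => f s + g s] let [apply] decompose derivatives of explicit
    expressions. *)

Lemma dpl_eq f x l1 l2 : derivable_pt_lim f x l1 -> l1 = l2 -> derivable_pt_lim f x l2.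
Proof. intros H ->; exact H. Qed.

Lemma dpl_plus f g x df dg : derivable_pt_lim f x df -> derivable_pt_lim g x dg ->
  derivable_pt_lim (fun s => f s + g s) x (df + dg).
Proof. intros; apply (derivable_pt_lim_plus f g); auto. Qed.

Lemma dpl_minus f g x df dg : derivable_pt_lim f x df -> derivable_pt_lim g x dg ->
  derivable_pt_lim (fun s => f s - g s) x (df - dg).
Proof. intros; apply (derivable_pt_lim_minus f g); auto. Qed.

Lemma dpl_mult f g x df dg : derivable_pt_lim f x df -> derivable_pt_lim g x dg ->
  derivable_pt_lim (fun s => f s * g s) x (df * g x + f x * dg).
Proof. intros; apply (derivable_pt_lim_mult f g); auto. Qed.

Lemma dpl_const c x : derivable_pt_lim (fun _ => c) x 0.
Proof. apply derivable_pt_lim_const. Qed.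

Lemma dpl_id x : derivable_pt_lim (fun s => s) x 1.
Proof. apply derivable_pt_lim_id. Qed.

Lemma dpl_scal c f x df : derivable_pt_lim f x df ->
  derivable_pt_lim (fun s => c * f s) x (c * df).
Proof. intros H. eapply dpl_eq; [apply dpl_mult; [apply dpl_const | exact H] | cbv beta; ring]. Qed.

Lemma dpl_divc f x df K : derivable_pt_lim f x df ->
  derivable_pt_lim (fun s => f s / K) x (df / K).
Proof.
  intros H. eapply dpl_eq; [apply (dpl_mult f (fun _ => / K)); [exact H | apply dpl_const] |].
  cbv beta; unfold Rdiv; ring.
Qed.

Lemma dpl_comp phi f x dphi df : derivable_pt_lim f x df ->
  derivable_pt_lim phi (f x) dphi -> derivable_pt_lim (fun s => phi (f s)) x (dphi * df).
Proof. intros H1 H2. apply (derivable_pt_lim_comp f phi); auto. Qed.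

(** [sqp x = (max x 0)^2] is C^1 with derivative [2 * pos x]; sums of [sqp]
    of constraint defects serve as Lyapunov functions for sets of the form
    {defect_i <= 0}. *)

Definition pos (x : R) : R := Rmax x 0.
Definition sqp (x : R) : R := pos x * pos x.

Lemma pos_nonneg x : 0 <= pos x.
Proof. apply Rmax_r. Qed.

Lemma pos_ge x : x <= pos x.
Proof. apply Rmax_l. Qed.

Lemma pos_mul_self x : pos x * x = sqp x.
Proof.
  unfold sqp, pos. destruct (Rle_dec x 0).
  - rewrite Rmax_right; auto; ring.
  - rewrite Rmax_left; lra.
Qed.

Lemma sqp_nonneg x : 0 <= sqp x.
Proof. unfold sqp. pose proof (pos_nonneg x). nra. Qed.

Lemma sqp_of_nonpos x : x <= 0 -> sqp x = 0.
Proof. intros. unfold sqp, pos. rewrite Rmax_right; auto; ring. Qed.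

Lemma sqp_nonpos_inv x : sqp x <= 0 -> x <= 0.
Proof. unfold sqp, pos. destruct (Rle_dec x 0); auto. rewrite Rmax_left; nra. Qed.

Lemma sqp_second_order x h : Rabs (sqp (x + h) - sqp x - 2 * pos x * h) <= h * h.
Proof.
  unfold sqp, pos.
  destruct (Rle_dec x 0) as [H1|H1]; destruct (Rle_dec (x + h) 0) as [H2|H2].
  - rewrite (Rmax_right x), (Rmax_right (x + h)); auto.
    replace (0 * 0 - 0 * 0 - 2 * 0 * h) with 0 by ring. rewrite Rabs_R0; nra.
  - rewrite (Rmax_right x), (Rmax_left (x + h)); try lra. rewrite Rabs_right; nra.
  - rewrite (Rmax_left x), (Rmax_right (x + h)); try lra. rewrite Rabs_right; nra.
  - rewrite (Rmax_left x), (Rmax_left (x + h)); try lra.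
    replace ((x + h) * (x + h) - x * x - 2 * x * h) with (h * h) by ring.
    rewrite Rabs_right; nra.
Qed.

Lemma dpl_sqp x : derivable_pt_lim sqp x (2 * pos x).
Proof.
  intros eps Heps. exists (mkposreal eps Heps). intros h Hh Hlt. simpl in Hlt.
  replace ((sqp (x + h) - sqp x) / h - 2 * pos x)
    with ((sqp (x + h) - sqp x - 2 * pos x * h) / h) by (field; auto).
  unfold Rdiv. rewrite Rabs_mult, Rabs_inv.
  apply Rle_lt_trans with (h * h * / Rabs h).
  - apply Rmult_le_compat_r; [left; apply Rinv_0_lt_compat, Rabs_pos_lt; auto |].
    apply sqp_second_order.
  - replace (h * h) with (Rabs h * Rabs h) by (rewrite <- Rabs_mult; rewrite Rabs_right; nra).
    rewrite Rmult_assoc, Rinv_r by (apply Rabs_no_R0; auto). lra.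
Qed.

Definition lip_on (a b : R) (f : R -> R) : Prop :=
  exists L, forall s t, a <= s <= b -> a <= t <= b -> Rabs (f s - f t) <= L * Rabs (s - t).

Lemma lip_on_nonneg a b f : lip_on a b f -> exists L, 0 <= L /\
  forall s t, a <= s <= b -> a <= t <= b -> Rabs (f s - f t) <= L * Rabs (s - t).
Proof.
  intros [L HL]. exists (Rabs L). split; [apply Rabs_pos |].
  intros s t Hs Ht. eapply Rle_trans; [apply HL; auto |].
  apply Rmult_le_compat_r; [apply Rabs_pos | apply RRle_abs].
Qed.

Lemma lip_on_bounded a b f : a <= b -> lip_on a b f ->
  exists B, forall t, a <= t <= b -> Rabs (f t) <= B.
Proof.
  intros Hab H. destruct (lip_on_nonneg _ _ _ H) as [L [HL0 HL]].
  exists (Rabs (f a) + L * (b - a)). intros t Ht.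
  specialize (HL t a Ht ltac:(lra)). rewrite (Rabs_right (t - a)) in HL by lra.
  pose proof (Rabs_triang_inv (f t) (f a)). nra.
Qed.

Lemma lip_on_sub a b a' b' f : lip_on a b f -> a <= a' -> b' <= b -> lip_on a' b' f.
Proof. intros [L H] H1 H2. exists L. intros s t Hs Ht. apply H; lra. Qed.

Lemma lip_on_ext a b f g : (forall s, f s = g s) -> lip_on a b f -> lip_on a b g.
Proof. intros Hfg [L H]. exists L. intros s t Hs Ht. rewrite <- !Hfg. auto. Qed.

Lemma lip_on_const a b c : lip_on a b (fun _ => c).
Proof. exists 0. intros. replace (c - c) with 0 by ring. rewrite Rabs_R0. lra. Qed.

Lemma lip_on_id a b : lip_on a b (fun s => s).
Proof. exists 1. intros. lra. Qed.

Lemma lip_on_plus a b f g : lip_on a b f -> lip_on a b g -> lip_on a b (fun s => f s + g s).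
Proof.
  intros [L1 H1] [L2 H2]. exists (L1 + L2). intros s t Hs Ht.
  replace (f s + g s - (f t + g t)) with ((f s - f t) + (g s - g t)) by ring.
  eapply Rle_trans; [apply Rabs_triang |].
  specialize (H1 s t Hs Ht). specialize (H2 s t Hs Ht). lra.
Qed.

Lemma lip_on_opp a b f : lip_on a b f -> lip_on a b (fun s => - f s).
Proof.
  intros [L H]. exists L. intros s t Hs Ht.
  replace (- f s - - f t) with (- (f s - f t)) by ring. rewrite Rabs_Ropp. auto.
Qed.

Lemma lip_on_minus a b f g : lip_on a b f -> lip_on a b g -> lip_on a b (fun s => f s - g s).
Proof. intros H1 H2. apply (lip_on_plus a b f (fun s => - g s)); auto using lip_on_opp. Qed.

Lemma lip_on_scal a b c f : lip_on a b f -> lip_on a b (fun s => c * f s).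
Proof.
  intros [L H]. exists (Rabs c * L). intros s t Hs Ht.
  replace (c * f s - c * f t) with (c * (f s - f t)) by ring.
  rewrite Rabs_mult, Rmult_assoc. apply Rmult_le_compat_l; [apply Rabs_pos | auto].
Qed.

Lemma lip_on_divc a b f K : lip_on a b f -> lip_on a b (fun s => f s / K).
Proof.
  intros H. destruct (lip_on_scal a b (/ K) f H) as [L HL]. exists L.
  intros s t Hs Ht. unfold Rdiv. rewrite (Rmult_comm (f s)), (Rmult_comm (f t)). auto.
Qed.

Lemma lip_on_mult a b f g : a <= b -> lip_on a b f -> lip_on a b g ->
  lip_on a b (fun s => f s * g s).
Proof.
  intros Hab H1 H2.
  destruct (lip_on_bounded _ _ _ Hab H1) as [B1 HB1].
  destruct (lip_on_bounded _ _ _ Hab H2) as [B2 HB2].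
  destruct (lip_on_nonneg _ _ _ H1) as [L1 [HL1 H1']].
  destruct (lip_on_nonneg _ _ _ H2) as [L2 [HL2 H2']].
  exists (L1 * B2 + B1 * L2). intros s t Hs Ht.
  replace (f s * g s - f t * g t) with ((f s - f t) * g s + f t * (g s - g t)) by ring.
  eapply Rle_trans; [apply Rabs_triang |]. rewrite !Rabs_mult.
  specialize (H1' s t Hs Ht). specialize (H2' s t Hs Ht).
  specialize (HB1 t Ht). specialize (HB2 s Hs).
  pose proof (Rabs_pos (f s - f t)). pose proof (Rabs_pos (g s)).
  pose proof (Rabs_pos (f t)). pose proof (Rabs_pos (g s - g t)).
  apply Rle_trans with (L1 * Rabs (s - t) * B2 + B1 * (L2 * Rabs (s - t))); [| lra].
  apply Rplus_le_compat; apply Rmult_le_compat; auto.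
Qed.

Definition loc_lip (phi : R -> R) : Prop :=
  forall B, exists L, forall x y, Rabs x <= B -> Rabs y <= B ->
    Rabs (phi x - phi y) <= L * Rabs (x - y).

Lemma lip_on_comp a b phi f : a <= b -> loc_lip phi -> lip_on a b f ->
  lip_on a b (fun s => phi (f s)).
Proof.
  intros Hab Hphi H. destruct (lip_on_bounded _ _ _ Hab H) as [B HB].
  destruct (Hphi B) as [L HL]. destruct (lip_on_nonneg _ _ _ H) as [L1 [HL1 H1]].
  exists (Rabs L * L1). intros s t Hs Ht.
  eapply Rle_trans; [apply HL; auto |].
  apply Rle_trans with (Rabs L * Rabs (f s - f t)).
  - apply Rmult_le_compat_r; [apply Rabs_pos | apply RRle_abs].
  - rewrite Rmult_assoc. apply Rmult_le_compat_l; [apply Rabs_pos | auto].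
Qed.

Lemma sqp_loc_lip : loc_lip sqp.
Proof.
  intros B. exists (2 * Rabs B). intros x y Hx Hy. unfold sqp, pos.
  replace (Rmax x 0 * Rmax x 0 - Rmax y 0 * Rmax y 0)
    with ((Rmax x 0 - Rmax y 0) * (Rmax x 0 + Rmax y 0)) by ring.
  rewrite Rabs_mult, (Rmult_comm (2 * Rabs B)).
  apply Rmult_le_compat; try apply Rabs_pos;
    unfold Rmax; destruct (Rle_dec x 0), (Rle_dec y 0);
    revert Hx Hy; unfold Rabs; repeat destruct Rcase_abs; lra.
Qed.

Lemma exp_loc_lip : loc_lip exp.
Proof.
  intros B. exists (exp (Rabs B)).
  assert (Hlt : forall u v, u < v -> Rabs v <= B ->
            Rabs (exp u - exp v) <= exp (Rabs B) * Rabs (u - v)).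
  { intros u v Huv Hv.
    destruct (MVT_cor2 exp exp u v Huv (fun c _ => derivable_pt_lim_exp c)) as [c [Hc1 Hc2]].
    rewrite <- Rabs_Ropp, <- (Rabs_Ropp (u - v)).
    replace (- (exp u - exp v)) with (exp v - exp u) by ring.
    replace (- (u - v)) with (v - u) by ring.
    rewrite Hc1, Rabs_mult, (Rabs_right (exp c)) by (left; apply exp_pos).
    apply Rmult_le_compat_r; [apply Rabs_pos |].
    destruct (Rle_lt_or_eq_dec c (Rabs B)) as [Hc | Hc].
    - revert Hv; unfold Rabs; repeat destruct Rcase_abs; lra.
    - left; apply exp_increasing; auto.
    - rewrite Hc; lra. }
  intros x y Hx Hy. destruct (Rtotal_order x y) as [Hxy | [-> | Hxy]].
  - apply Hlt; auto.
  - replace (y - y) with 0 by ring. replace (exp y - exp y) with 0 by ring.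
    rewrite Rabs_R0. lra.
  - rewrite <- Rabs_Ropp, <- (Rabs_Ropp (x - y)).
    replace (- (exp x - exp y)) with (exp y - exp x) by ring.
    replace (- (x - y)) with (y - x) by ring. apply Hlt; auto.
Qed.

(** A null set is covered by intervals [a_k, d_k] of small total length, each
    point lying in some interval together with a right margin [r_k].  The
    length of the part of the union of the intervals inside [t0, t] is a
    nondecreasing function of [t] that grows at least like the identity on
    each [a_k, d_k]; it lets Lipschitz functions "pay" for the null set where
    no derivative information is available. *)

Lemma sum_f_R0_le (f g : nat -> R) n : (forall k, (k <= n)%nat -> f k <= g k) ->
  sum_f_R0 f n <= sum_f_R0 g n.
Proof.
  induction n; intros H; simpl; [apply H; lia |].
  apply Rplus_le_compat; [apply IHn; intros; apply H |  apply H]; lia.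
Qed.

Lemma sum_f_R0_nonneg (f : nat -> R) n : (forall k, 0 <= f k) -> 0 <= sum_f_R0 f n.
Proof. induction n; intros H; simpl; [apply H |]. pose proof (H (S n)). pose proof (IHn H). lra. Qed.

Lemma sum_f_R0_scal c f n : sum_f_R0 (fun k => c * f k) n = c * sum_f_R0 f n.
Proof. induction n; simpl; [ring |]. rewrite IHn. ring. Qed.

Lemma sum_half_powers n : sum_f_R0 (fun k => (/ 2) ^ S k) n <= 1.
Proof.
  assert (Hclosed : forall n, sum_f_R0 (fun k => (/ 2) ^ S k) n = 1 - (/ 2) ^ S n).
  { induction n0; [simpl; field |]. rewrite tech5, IHn0. simpl. field. }
  rewrite Hclosed. pose proof (pow_lt (/ 2) (S n) ltac:(lra)). lra.
Qed.

Lemma null1_margin_cover N δ : null1 N -> 0 < δ ->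
  exists a d r : nat -> R,
    (forall k, a k <= d k) /\ (forall n, sum_f_R0 (fun k => d k - a k) n <= 2 * δ) /\
    (forall k, 0 < r k) /\ (forall t, N t -> exists k, a k <= t /\ t + r k <= d k).
Proof.
  intros HN Hδ. destruct (HN δ Hδ) as [a [b [Hab [Hcov Hsum]]]].
  exists a, (fun k => b k + δ * (/ 2) ^ S k), (fun k => δ * (/ 2) ^ S k).
  assert (Hr : forall k, 0 < δ * (/ 2) ^ S k)
    by (intros k; apply Rmult_lt_0_compat; [lra | apply pow_lt; lra]).
  split; [| split; [| split]]; auto.
  - intros k. pose proof (Hab k). pose proof (Hr k). lra.
  - intros n.
    replace (fun k => b k + δ * (/ 2) ^ S k - a k)
      with (fun k => (b k - a k) + δ * (/ 2) ^ S k)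
      by (apply functional_extensionality; intros; ring).
    rewrite plus_sum, sum_f_R0_scal. pose proof (Hsum n). pose proof (sum_half_powers n). nra.
  - intros t Ht. destruct (Hcov t Ht) as [k Hk]. exists k. lra.
Qed.

Definition piece_len (t0 a d t : R) : R := Rmax 0 (Rmin t d - Rmax t0 a).

Definition cover_len (t0 : R) (a d : nat -> R) (n : nat) (t : R) : R :=
  sum_f_R0 (fun k => piece_len t0 (a k) (d k) t) n.

Definition cover_measure (t0 : R) (a d : nat -> R) (t : R) : R :=
  real (Lim_seq (fun n => cover_len t0 a d n t)).

Lemma piece_len_nonneg t0 a d t : 0 <= piece_len t0 a d t.
Proof. apply Rmax_l. Qed.

Lemma piece_len_le t0 a d t : a <= d -> piece_len t0 a d t <= d - a.
Proof.
  intros. unfold piece_len. apply Rmax_lub; [lra |].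
  pose proof (Rmin_r t d). pose proof (Rmax_r t0 a). lra.
Qed.

Lemma piece_len_mono t0 a d t s : t <= s -> piece_len t0 a d t <= piece_len t0 a d s.
Proof.
  intros. unfold piece_len. apply Rle_max_compat_l.
  assert (Rmin t d <= Rmin s d) by (unfold Rmin; destruct (Rle_dec t d), (Rle_dec s d); lra).
  lra.
Qed.

Lemma piece_len_incr t0 a d t s : t0 <= t -> t <= s -> a <= t -> s <= d ->
  piece_len t0 a d s - piece_len t0 a d t = s - t.
Proof.
  intros. unfold piece_len. rewrite (Rmin_left s d), (Rmin_left t d) by lra.
  assert (Rmax t0 a <= t) by (apply Rmax_lub; lra).
  rewrite (Rmax_right 0 (s - Rmax t0 a)), (Rmax_right 0 (t - Rmax t0 a)) by lra. ring.
Qed.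

Section CoverMeasure.

Variables (t0 B : R) (a d : nat -> R).
Hypothesis Had : forall k, a k <= d k.
Hypothesis Hsum : forall n, sum_f_R0 (fun k => d k - a k) n <= B.

Lemma cover_len_bound n t : cover_len t0 a d n t <= B.
Proof.
  eapply Rle_trans; [| apply (Hsum n)].
  apply sum_f_R0_le. intros. apply piece_len_le; auto.
Qed.

Lemma cover_len_lim t : is_lim_seq (fun n => cover_len t0 a d n t) (cover_measure t0 a d t).
Proof.
  assert (Hincr : forall n, cover_len t0 a d n t <= cover_len t0 a d (S n) t).
  { intros n. unfold cover_len. simpl. pose proof (piece_len_nonneg t0 (a (S n)) (d (S n)) t). lra. }
  destruct (ex_finite_lim_seq_incr _ B Hincr (fun n => cover_len_bound n t)) as [l Hl].
  unfold cover_measure. rewrite (is_lim_seq_unique _ _ Hl). exact Hl.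
Qed.

Lemma cover_measure_bounds t : 0 <= cover_measure t0 a d t <= B.
Proof.
  split.
  - assert (H := is_lim_seq_le (fun _ => 0) _ 0 _
      (fun n => sum_f_R0_nonneg _ n (fun k => piece_len_nonneg _ _ _ _))
      (is_lim_seq_const 0) (cover_len_lim t)). exact H.
  - assert (H := is_lim_seq_le _ (fun _ => B) _ B (fun n => cover_len_bound n t)
      (cover_len_lim t) (is_lim_seq_const B)). exact H.
Qed.

Lemma cover_measure_mono t s : t <= s -> cover_measure t0 a d t <= cover_measure t0 a d s.
Proof.
  intros Hts.
  assert (H := is_lim_seq_le _ _ _ _
    (fun n => sum_f_R0_le _ _ n (fun k _ => piece_len_mono t0 (a k) (d k) t s Hts))
    (cover_len_lim t) (cover_len_lim s)). exact H.
Qed.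

Lemma cover_measure_incr k t s : t0 <= t -> t <= s -> a k <= t -> s <= d k ->
  s - t <= cover_measure t0 a d s - cover_measure t0 a d t.
Proof.
  intros H0 Hts Hat Hsd.
  assert (Hpart : forall m, (k <= m)%nat -> s - t <= cover_len t0 a d m s - cover_len t0 a d m t).
  { unfold cover_len. induction m; intros Hm.
    - replace k with 0%nat in * by lia. simpl. rewrite piece_len_incr; auto. lra.
    - simpl. pose proof (piece_len_mono t0 (a (S m)) (d (S m)) t s Hts).
      destruct (Nat.eq_dec k (S m)) as [-> | Hk].
      + pose proof (sum_f_R0_le (fun j => piece_len t0 (a j) (d j) t)
          (fun j => piece_len t0 (a j) (d j) s) m (fun j _ => piece_len_mono _ _ _ _ _ Hts)).
        pose proof (piece_len_incr t0 (a (S m)) (d (S m)) t s H0 Hts Hat Hsd). lra.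
      + pose proof (IHm ltac:(lia)). lra. }
  pose proof (is_lim_seq_minus' _ _ _ _ (cover_len_lim s) (cover_len_lim t)) as L.
  apply (is_lim_seq_incr_n _ k) in L.
  assert (H := is_lim_seq_le _ _ _ _ (fun n => Hpart (n + k)%nat ltac:(lia))
    (is_lim_seq_const (s - t)) L). exact H.
Qed.

End CoverMeasure.

(* Real induction: a property propagating across every point from the left
   (closedness) and a little to the right (openness) holds on all of [t0, t1]. *)
Lemma real_induction (h : R -> R) t0 t1 : t0 <= t1 -> h t0 <= 0 ->
  (forall m, t0 < m <= t1 -> (forall u, t0 <= u < m -> h u <= 0) -> h m <= 0) ->
  (forall m, t0 <= m < t1 -> h m <= 0 -> exists r, 0 < r /\
      forall u, m <= u <= m + r -> u <= t1 -> h u <= 0) ->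
  h t1 <= 0.
Proof.
  intros H01 Ht0 Hleft Hright.
  set (E := fun s => t0 <= s <= t1 /\ forall u, t0 <= u <= s -> h u <= 0).
  assert (HEt0 : E t0) by (split; [lra | intros u Hu; replace u with t0 by lra; auto]).
  destruct (completeness E) as [m [Hub Hlub]];
    [exists t1; intros s [Hs _]; lra | exists t0; exact HEt0 |].
  assert (Hm0 : t0 <= m) by (apply Hub; exact HEt0).
  assert (Hm1 : m <= t1) by (apply Hlub; intros s [Hs _]; lra).
  assert (Hbelow : forall u, t0 <= u < m -> h u <= 0).
  { intros u Hu. destruct (classic (exists s, E s /\ u < s)) as [[s [[_ Hs] Hus]] | Hn].
    - apply Hs. lra.
    - exfalso. assert (m <= u); [| lra].
      apply Hlub. intros s Hs. destruct (Rle_dec s u); auto.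
      exfalso; apply Hn; exists s; split; auto; lra. }
  assert (Hm : h m <= 0) by (destruct (Req_dec m t0) as [-> | ]; auto; apply Hleft; auto; lra).
  assert (Hupto : forall u, t0 <= u <= m -> h u <= 0)
    by (intros u Hu; destruct (Req_dec u m) as [-> | ]; auto; apply Hbelow; lra).
  destruct (Req_dec m t1) as [<- | Hne]; auto.
  destruct (Hright m ltac:(lra) Hm) as [r [Hr Hstep]].
  assert (E (Rmin (m + r) t1)).
  { split; [unfold Rmin; destruct Rle_dec; lra |].
    intros u Hu. destruct (Rle_dec u m); [apply Hupto; lra |].
    apply Hstep; unfold Rmin in Hu; destruct Rle_dec in Hu; lra. }
  assert (Rmin (m + r) t1 <= m) by (apply Hub; auto).
  unfold Rmin in *; destruct Rle_dec in *; lra.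
Qed.

Lemma left_closed_nonpos (h : R -> R) t0 m L : t0 < m -> 0 <= L ->
  (forall u, t0 <= u < m -> h u <= 0) ->
  (forall u, t0 <= u <= m -> h m <= h u + L * (m - u)) -> h m <= 0.
Proof.
  intros Hm HL Hbelow Hjump. apply Rnot_gt_le. intro Hpos.
  set (u := Rmax t0 (m - h m / (2 * (L + 1)))).
  assert (Hq : 0 < h m / (2 * (L + 1))) by (apply Rdiv_lt_0_compat; lra).
  assert (Hu : t0 <= u < m) by (unfold u; split; [apply Rmax_l | apply Rmax_lub_lt; lra]).
  assert (Hmu : m - u <= h m / (2 * (L + 1))) by (unfold u; pose proof (Rmax_r t0 (m - h m / (2 * (L + 1)))); lra).
  pose proof (Hbelow u Hu). pose proof (Hjump u ltac:(lra)).
  assert (L * (m - u) <= L * (h m / (2 * (L + 1)))) by (apply Rmult_le_compat_l; lra).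
  assert (L * (h m / (2 * (L + 1))) <= h m / 2).
  { apply (Rmult_le_reg_r (2 * (L + 1))); [lra |].
    replace (L * (h m / (2 * (L + 1))) * (2 * (L + 1))) with (L * h m) by (field; lra).
    replace (h m / 2 * (2 * (L + 1))) with ((L + 1) * h m) by field. nra. }
  lra.
Qed.

Lemma derivative_right_bound f m d e : derivable_pt_lim f m d -> 0 < e ->
  exists r, 0 < r /\ forall u, m <= u <= m + r -> f u - f m <= (d + e) * (u - m).
Proof.
  intros Hd He. destruct (Hd e He) as [r Hr].
  exists (r / 2). split; [pose proof (cond_pos r); lra |].
  intros u Hu. destruct (Req_dec u m) as [-> | Hne]; [lra |].
  assert (Habs : Rabs (u - m) < r) by (rewrite Rabs_right; pose proof (cond_pos r); lra).
  specialize (Hr (u - m) ltac:(lra) Habs). replace (m + (u - m)) with u in Hr by ring.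
  apply Rabs_def2 in Hr. destruct Hr as [Hr _].
  assert (Hpos : 0 < u - m) by lra.
  apply (Rmult_le_reg_r (/ (u - m))); [apply Rinv_0_lt_compat; lra |].
  replace ((f u - f m) * / (u - m)) with ((f u - f m) / (u - m)) by reflexivity.
  replace ((d + e) * (u - m) * / (u - m)) with (d + e) by (field; lra). lra.
Qed.

(* Core estimate of the monotonicity theorem (derivative information also at
   [t0]): [f] stays below [f t0 + e1 (t - t0) + L * (measure of a cover of the
   null set up to t)], by real induction. *)
Lemma lip_increment_bound f t0 t1 N L e1 δ : t0 <= t1 -> null1 N -> 0 <= L ->
  (forall s t, t0 <= s <= t1 -> t0 <= t <= t1 -> Rabs (f s - f t) <= L * Rabs (s - t)) ->
  0 < e1 -> 0 < δ ->
  (forall t, t0 <= t < t1 -> ~ N t -> exists d, derivable_pt_lim f t d /\ d <= 0) ->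
  f t1 - f t0 <= e1 * (t1 - t0) + L * (2 * δ).
Proof.
  intros H01 HN HL0 HLf He1 Hδ Hd.
  destruct (null1_margin_cover N δ HN Hδ) as [a [d [r [Had [Hsum [Hr Hcov]]]]]].
  set (mu := cover_measure t0 a d).
  pose proof (cover_measure_bounds t0 (2 * δ) a d Had Hsum) as Mb.
  pose proof (cover_measure_mono t0 (2 * δ) a d Had Hsum) as Mm.
  pose proof (cover_measure_incr t0 (2 * δ) a d Had Hsum) as Mi.
  set (h := fun t => f t - f t0 - e1 * (t - t0) - L * mu t).
  assert (Hh : h t1 <= 0).
  { apply (real_induction h t0 t1 H01).
    - unfold h. pose proof (Mb t0). fold mu in H. nra.
    - intros m Hm Hbelow. apply (left_closed_nonpos h t0 m L); auto; try lra.
      intros u Hu. pose proof (HLf m u ltac:(lra) ltac:(lra)) as Hl.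
      rewrite (Rabs_right (m - u)) in Hl by lra. pose proof (Rle_abs (f m - f u)).
      pose proof (Mm u m ltac:(lra)). unfold h, mu in *. nra.
    - intros m Hm Hhm. destruct (classic (N m)) as [HNm | HNm].
      + (* inside a covering interval the measure term absorbs the increments *)
        destruct (Hcov m HNm) as [k [Hak Hdk]].
        exists (r k). split; [apply Hr |]. intros u Hu Hut.
        pose proof (Mi k m u ltac:(lra) ltac:(lra) Hak ltac:(lra)).
        pose proof (HLf u m ltac:(lra) ltac:(lra)) as Hl.
        rewrite (Rabs_right (u - m)) in Hl by lra. pose proof (Rle_abs (f u - f m)).
        unfold h, mu in *. nra.
      + (* outside the null set the derivative controls the increments *)
        destruct (Hd m Hm HNm) as [dv [Hdv Hdv0]].
        destruct (derivative_right_bound f m dv e1 Hdv He1) as [r' [Hr' Hstep]].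
        exists r'. split; auto. intros u Hu Hut.
        pose proof (Hstep u Hu). pose proof (Mm m u ltac:(lra)).
        unfold h, mu in *. nra. }
  unfold h in Hh. pose proof (Mb t1). fold mu in H.
  assert (L * mu t1 <= L * (2 * δ)) by (apply Rmult_le_compat_l; lra).
  lra.
Qed.

Lemma lip_nonincreasing_closed f t0 t1 N : t0 <= t1 -> null1 N -> lip_on t0 t1 f ->
  (forall t, t0 <= t < t1 -> ~ N t -> exists d, derivable_pt_lim f t d /\ d <= 0) ->
  f t1 <= f t0.
Proof.
  intros H01 HN HL Hd.
  destruct (lip_on_nonneg _ _ _ HL) as [L [HL0 HLf]].
  apply Rnot_gt_le. intro Hgt. set (ε := f t1 - f t0).
  set (e1 := ε / (4 * (t1 - t0 + 1))). set (δ := ε / (4 * (L + 1))).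
  assert (He1 : 0 < e1) by (apply Rdiv_lt_0_compat; unfold ε; lra).
  assert (Hδ : 0 < δ) by (apply Rdiv_lt_0_compat; unfold ε; lra).
  pose proof (lip_increment_bound f t0 t1 N L e1 δ H01 HN HL0 HLf He1 Hδ Hd).
  assert (e1 * (t1 - t0) <= ε / 4).
  { apply (Rmult_le_reg_r (4 * (t1 - t0 + 1))); [lra |].
    unfold e1. replace (ε / (4 * (t1 - t0 + 1)) * (t1 - t0) * (4 * (t1 - t0 + 1)))
      with (ε * (t1 - t0)) by (field; lra). unfold ε in *. nra. }
  assert (L * (2 * δ) <= ε / 2).
  { unfold δ. replace (L * (2 * (ε / (4 * (L + 1))))) with (ε / 2 * (L / (L + 1))) by (field; lra).
    assert (L / (L + 1) <= 1) by (apply (Rmult_le_reg_r (L + 1)); [lra |];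
      replace (L / (L + 1) * (L + 1)) with L by (field; lra); lra).
    unfold ε in *. nra. }
  unfold ε in *. lra.
Qed.

Lemma lip_nonincreasing f t0 t1 N : t0 <= t1 -> null1 N -> lip_on t0 t1 f ->
  (forall t, t0 < t < t1 -> ~ N t -> exists d, derivable_pt_lim f t d /\ d <= 0) ->
  f t1 <= f t0.
Proof.
  intros H01 HN HL Hd. destruct (Req_dec t0 t1) as [-> | Hne]; [lra |].
  destruct (lip_on_nonneg _ _ _ HL) as [L [HL0 HLf]].
  assert (Hinner : forall s, t0 < s < t1 -> f t1 <= f s).
  { intros s Hs. apply (lip_nonincreasing_closed f s t1 N); auto; [lra | |].
    - apply (lip_on_sub t0 t1); auto; lra.
    - intros t Ht HNt; apply Hd; auto; lra. }
  apply Rnot_gt_le. intro Hgt.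
  set (s := t0 + Rmin ((t1 - t0) / 2) ((f t1 - f t0) / (2 * (L + 1)))).
  assert (Hp : 0 < (f t1 - f t0) / (2 * (L + 1))) by (apply Rdiv_lt_0_compat; lra).
  assert (Hs : t0 < s < t1) by (unfold s, Rmin; destruct Rle_dec; lra).
  assert (Hst : s - t0 <= (f t1 - f t0) / (2 * (L + 1)))
    by (unfold s; pose proof (Rmin_r ((t1 - t0) / 2) ((f t1 - f t0) / (2 * (L + 1)))); lra).
  pose proof (Hinner s Hs). pose proof (HLf s t0 ltac:(lra) ltac:(lra)) as Hl.
  rewrite (Rabs_right (s - t0)) in Hl by lra. pose proof (Rle_abs (f s - f t0)).
  assert (L * (s - t0) <= L * ((f t1 - f t0) / (2 * (L + 1)))) by (apply Rmult_le_compat_l; lra).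
  assert (L * ((f t1 - f t0) / (2 * (L + 1))) <= (f t1 - f t0) / 2).
  { replace (L * ((f t1 - f t0) / (2 * (L + 1)))) with ((f t1 - f t0) / 2 * (L / (L + 1)))
      by (field; lra).
    assert (L / (L + 1) <= 1) by (apply (Rmult_le_reg_r (L + 1)); [lra |];
      replace (L / (L + 1) * (L + 1)) with L by (field; lra); lra).
    nra. }
  lra.
Qed.

Lemma lip_gronwall V t0 t1 N C : t0 <= t1 -> null1 N -> lip_on t0 t1 V -> V t0 <= 0 ->
  (forall t, t0 < t < t1 -> ~ N t -> exists d, derivable_pt_lim V t d /\ d <= C * V t) ->
  V t1 <= 0.
Proof.
  intros H01 HN HL H0 Hd.
  assert (HW : exp (- C * t1) * V t1 <= exp (- C * t0) * V t0).
  { apply (lip_nonincreasing (fun s => exp (- C * s) * V s) t0 t1 N); auto.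
    - apply lip_on_mult; auto.
      apply (lip_on_comp t0 t1 exp (fun s => - C * s)); auto using exp_loc_lip, lip_on_scal, lip_on_id.
    - intros t Ht HNt. destruct (Hd t Ht HNt) as [d [Hd1 Hd2]].
      eexists. split.
      + apply dpl_mult; [| exact Hd1].
        apply (dpl_comp exp (fun s => - C * s)); [apply dpl_scal, dpl_id | apply derivable_pt_lim_exp].
      + cbv beta. pose proof (exp_pos (- C * t)). nra. }
  pose proof (exp_pos (- C * t0)). pose proof (exp_pos (- C * t1)). nra.
Qed.

Lemma weighted_excess_nonincreasing y T0 N A δ : 0 < δ -> null1 N ->
  (forall b, T0 <= b -> lip_on T0 b y) ->
  (forall t, T0 < t -> ~ N t -> exists d, derivable_pt_lim y t d /\ d <= A - δ * y t) ->
  forall t, T0 <= t ->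
    exp (2 * δ * t) * sqp (y t - A / δ) <= exp (2 * δ * T0) * sqp (y T0 - A / δ).
Proof.
  intros Hδ HN HL Hd t Ht.
  apply (lip_nonincreasing (fun s => exp (2 * δ * s) * sqp (y s - A / δ)) T0 t N); auto.
  - apply lip_on_mult; auto.
    + apply (lip_on_comp T0 t exp (fun s => 2 * δ * s)); auto using exp_loc_lip, lip_on_scal, lip_on_id.
    + apply (lip_on_comp T0 t sqp (fun s => y s - A / δ)); auto using sqp_loc_lip.
      apply lip_on_minus; auto using lip_on_const.
  - intros s Hs HNs. destruct (Hd s ltac:(lra) HNs) as [d [Hd1 Hd2]].
    eexists. split.
    + apply dpl_mult.
      * apply (dpl_comp exp (fun s => 2 * δ * s)); [apply dpl_scal, dpl_id | apply derivable_pt_lim_exp].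
      * apply (dpl_comp sqp (fun s => y s - A / δ)); [apply dpl_minus; [exact Hd1 | apply dpl_const] | apply dpl_sqp].
    + cbv beta. pose proof (exp_pos (2 * δ * s)).
      pose proof (pos_nonneg (y s - A / δ)). pose proof (pos_mul_self (y s - A / δ)).
      assert (A - δ * y s = - δ * (y s - A / δ)) by (field; lra).
      assert (2 * pos (y s - A / δ) * (d - 0) <= - 2 * δ * sqp (y s - A / δ)) by nra.
      nra.
Qed.

Lemma lip_eventually_below y T0 N A δ : 0 < δ -> null1 N ->
  (forall b, T0 <= b -> lip_on T0 b y) ->
  (forall t, T0 < t -> ~ N t -> exists d, derivable_pt_lim y t d /\ d <= A - δ * y t) ->
  forall η, 0 < η -> exists T, forall t, T <= t -> y t <= A / δ + η.
Proof.
  intros Hδ HN HL Hd η Hη.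
  pose proof (weighted_excess_nonincreasing y T0 N A δ Hδ HN HL Hd) as HW.
  set (K0 := exp (2 * δ * T0) * sqp (y T0 - A / δ)) in HW.
  assert (HK0 : 0 <= K0) by (unfold K0; pose proof (exp_pos (2 * δ * T0)); pose proof (sqp_nonneg (y T0 - A / δ)); nra).
  set (T := Rmax (Rmax T0 1) (K0 / (2 * δ * (η * η)) + 1)).
  exists T. intros t Ht.
  assert (Ht0 : T0 <= t /\ 1 <= t /\ K0 / (2 * δ * (η * η)) + 1 <= t).
  { unfold T in Ht. pose proof (Rmax_l (Rmax T0 1) (K0 / (2 * δ * (η * η)) + 1)).
    pose proof (Rmax_r (Rmax T0 1) (K0 / (2 * δ * (η * η)) + 1)).
    pose proof (Rmax_l T0 1). pose proof (Rmax_r T0 1). lra. }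
  specialize (HW t ltac:(lra)).
  apply Rnot_gt_le. intro Hgt.
  assert (Hsq : η * η < sqp (y t - A / δ)) by (unfold sqp, pos; rewrite Rmax_left by lra; nra).
  assert (He : 2 * δ * t < exp (2 * δ * t)) by (pose proof (exp_ineq1 (2 * δ * t) ltac:(nra)); lra).
  assert (HK : K0 < 2 * δ * t * (η * η)).
  { assert (Hp : 0 < 2 * δ * (η * η)) by (apply Rmult_lt_0_compat; nra).
    apply (Rmult_lt_reg_r (/ (2 * δ * (η * η)))); [apply Rinv_0_lt_compat; lra |].
    replace (2 * δ * t * (η * η) * / (2 * δ * (η * η))) with t by (field; nra).
    replace (K0 * / (2 * δ * (η * η))) with (K0 / (2 * δ * (η * η))) by reflexivity. lra. }
  pose proof (exp_pos (2 * δ * t)). nra.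
Qed.

Lemma nonincreasing_limit (f : R -> R) : (forall t, 0 <= t -> 0 <= f t) ->
  (forall t1 t2, 0 <= t1 <= t2 -> f t2 <= f t1) ->
  exists l, 0 <= l /\ (forall t, 0 <= t -> l <= f t) /\
    (forall b, (forall t, 0 <= t -> b <= f t) -> b <= l) /\
    (forall η, 0 < η -> exists T, 0 <= T /\ forall t, T <= t -> f t <= l + η).
Proof.
  intros Hpos Hmono.
  set (E := fun x => exists t, 0 <= t /\ x = - f t).
  destruct (completeness E) as [m [Hub Hlub]].
  { exists 0. intros x [t [Ht ->]]. pose proof (Hpos t Ht). lra. }
  { exists (- f 0). exists 0. split; [lra | auto]. }
  exists (- m). split; [| split; [| split]].
  - assert (m <= 0); [| lra]. apply Hlub. intros x [t [Ht ->]]. pose proof (Hpos t Ht). lra.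
  - intros t Ht. assert (- f t <= m) by (apply Hub; exists t; split; auto). lra.
  - intros b Hb. assert (m <= - b); [| lra]. apply Hlub. intros x [t [Ht ->]]. pose proof (Hb t Ht). lra.
  - intros η Hη. destruct (classic (exists t, 0 <= t /\ f t <= - m + η)) as [[T [HT HfT]] | Hn].
    + exists T. split; auto. intros t Ht. pose proof (Hmono T t ltac:(lra)). lra.
    + exfalso. assert (m <= m - η); [| lra]. apply Hlub. intros x [t [Ht ->]].
      destruct (Rle_dec (- f t) (m - η)); auto. exfalso. apply Hn. exists t. split; auto. lra.
Qed.

(** Linear functionals are preserved by convex combinations and
    are continuous, so every bound [lin (X w) <= c + C eps] valid on the
    [eps]-neighbourhoods of [z] in [D'] passes to the velocity. *)

Definition lin (aE aM aF aS : R) (y : vec4) : R :=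
  aE * cE y + aM * cM y + aF * cF y + aS * cMs y.

Lemma lin_E y : lin 1 0 0 0 y = cE y.
Proof. unfold lin; ring. Qed.
Lemma lin_M y : lin 0 1 0 0 y = cM y.
Proof. unfold lin; ring. Qed.
Lemma lin_F y : lin 0 0 1 0 y = cF y.
Proof. unfold lin; ring. Qed.
Lemma lin_Ms y : lin 0 0 0 1 y = cMs y.
Proof. unfold lin; ring. Qed.

Lemma lin_opp aE aM aF aS y : lin (- aE) (- aM) (- aF) (- aS) y = - lin aE aM aF aS y.
Proof. unfold lin; ring. Qed.

Lemma coord_le_vnorm v : Rabs (cE v) <= vnorm v /\ Rabs (cM v) <= vnorm v /\
  Rabs (cF v) <= vnorm v /\ Rabs (cMs v) <= vnorm v.
Proof.
  unfold vnorm.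
  assert (G : forall x s, 0 <= s -> Rabs x <= sqrt (x ^ 2 + s)).
  { intros x s Hs. rewrite <- sqrt_Rsqr_abs. apply sqrt_le_1_alt. unfold Rsqr. simpl. lra. }
  pose proof (pow2_ge_0 (cE v)). pose proof (pow2_ge_0 (cM v)).
  pose proof (pow2_ge_0 (cF v)). pose proof (pow2_ge_0 (cMs v)).
  repeat split.
  - replace (cE v ^ 2 + cM v ^ 2 + cF v ^ 2 + cMs v ^ 2)
      with (cE v ^ 2 + (cM v ^ 2 + cF v ^ 2 + cMs v ^ 2)) by ring. apply G; lra.
  - replace (cE v ^ 2 + cM v ^ 2 + cF v ^ 2 + cMs v ^ 2)
      with (cM v ^ 2 + (cE v ^ 2 + cF v ^ 2 + cMs v ^ 2)) by ring. apply G; lra.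
  - replace (cE v ^ 2 + cM v ^ 2 + cF v ^ 2 + cMs v ^ 2)
      with (cF v ^ 2 + (cE v ^ 2 + cM v ^ 2 + cMs v ^ 2)) by ring. apply G; lra.
  - replace (cE v ^ 2 + cM v ^ 2 + cF v ^ 2 + cMs v ^ 2)
      with (cMs v ^ 2 + (cE v ^ 2 + cM v ^ 2 + cF v ^ 2)) by ring. apply G; lra.
Qed.

Lemma vnorm_le_l1 v : vnorm v <= Rabs (cE v) + Rabs (cM v) + Rabs (cF v) + Rabs (cMs v).
Proof.
  pose proof (Rabs_pos (cE v)). pose proof (Rabs_pos (cM v)).
  pose proof (Rabs_pos (cF v)). pose proof (Rabs_pos (cMs v)).
  unfold vnorm. rewrite <- (sqrt_Rsqr (Rabs (cE v) + Rabs (cM v) + Rabs (cF v) + Rabs (cMs v))) by lra.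
  apply sqrt_le_1_alt. unfold Rsqr.
  assert (Hsq : forall x, x ^ 2 = Rabs x * Rabs x)
    by (intros; rewrite <- Rabs_mult; rewrite Rabs_right; [ring | nra]).
  rewrite !Hsq. nra.
Qed.

Lemma near_coords w z eps : vnorm (vsub w z) <= eps ->
  Rabs (cE w - cE z) <= eps /\ Rabs (cM w - cM z) <= eps /\
  Rabs (cF w - cF z) <= eps /\ Rabs (cMs w - cMs z) <= eps.
Proof. intros H. destruct (coord_le_vnorm (vsub w z)) as [h1 [h2 [h3 h4]]]. simpl in *. repeat split; lra. Qed.

Lemma lin_conv aE aM aF aS c S x : (forall y, S y -> lin aE aM aF aS y <= c) -> conv S x ->
  lin aE aM aF aS x <= c.
Proof.
  intros HS [n [w [p [Hwp [Hw1 [HE [HM [HF HMs]]]]]]]].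
  assert (Hsum : forall m, (m <= n)%nat ->
    aE * sum_f_R0 (fun i => w i * cE (p i)) m + aM * sum_f_R0 (fun i => w i * cM (p i)) m +
    aF * sum_f_R0 (fun i => w i * cF (p i)) m + aS * sum_f_R0 (fun i => w i * cMs (p i)) m
    <= c * sum_f_R0 w m).
  { induction m; intros Hm; simpl; destruct (Hwp _ Hm) as [Hw HSp]; pose proof (HS _ HSp);
      unfold lin in *; [nra |]. pose proof (IHm ltac:(lia)). nra. }
  unfold lin. rewrite HE, HM, HF, HMs. pose proof (Hsum n (le_n n)). rewrite Hw1 in H. lra.
Qed.

Lemma lin_lipschitz aE aM aF aS x y :
  lin aE aM aF aS x - lin aE aM aF aS y
    <= (Rabs aE + Rabs aM + Rabs aF + Rabs aS) * vnorm (vsub x y).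
Proof.
  destruct (coord_le_vnorm (vsub x y)) as [h1 [h2 [h3 h4]]]. simpl in h1, h2, h3, h4.
  assert (G : forall a u, Rabs u <= vnorm (vsub x y) -> a * u <= Rabs a * vnorm (vsub x y)).
  { intros a u Hu. apply Rle_trans with (Rabs (a * u)); [apply Rle_abs |].
    rewrite Rabs_mult. apply Rmult_le_compat_l; [apply Rabs_pos | auto]. }
  pose proof (G aE _ h1). pose proof (G aM _ h2). pose proof (G aF _ h3). pose proof (G aS _ h4).
  unfold lin. lra.
Qed.

Lemma lin_closure aE aM aF aS c S x : (forall y, S y -> lin aE aM aF aS y <= c) ->
  closure4 (conv S) x -> lin aE aM aF aS x <= c.
Proof.
  intros HS Hcl. apply Rnot_gt_le. intro Hgt.
  set (A := Rabs aE + Rabs aM + Rabs aF + Rabs aS + 1).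
  assert (HA : 0 < A) by (unfold A; pose proof (Rabs_pos aE); pose proof (Rabs_pos aM);
    pose proof (Rabs_pos aF); pose proof (Rabs_pos aS); lra).
  destruct (Hcl ((lin aE aM aF aS x - c) / A)) as [y [Hy Hxy]]; [apply Rdiv_lt_0_compat; lra |].
  pose proof (lin_conv _ _ _ _ _ _ _ HS Hy). pose proof (lin_lipschitz aE aM aF aS x y).
  assert (0 <= vnorm (vsub x y)) by apply sqrt_pos.
  assert (A * vnorm (vsub x y) < lin aE aM aF aS x - c).
  { replace (lin aE aM aF aS x - c) with (A * ((lin aE aM aF aS x - c) / A)) by (field; lra).
    apply Rmult_lt_compat_l; auto. }
  unfold A in *. nra.
Qed.

Lemma null4_empty : null4 (fun _ => False).
Proof.
  intros eps Heps. exists (fun _ => mkv 0 0 0 0), (fun _ => mkv 0 0 0 0).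
  split; [intros k; simpl; lra |]. split; [intros z [] |].
  intros n. replace (sum_f_R0 (fun k => box_vol (mkv 0 0 0 0) (mkv 0 0 0 0)) n) with 0; [lra |].
  induction n; simpl; unfold box_vol in *; simpl in *; [ring | rewrite <- IHn; ring].
Qed.

Lemma filippov_lin_bound X z v aE aM aF aS c e0 C : filippov_set X z v -> 0 < e0 ->
  (forall eps, 0 < eps <= e0 -> forall w, vnorm (vsub w z) <= eps -> in_D' w ->
      lin aE aM aF aS (X w) <= c + C * eps) ->
  lin aE aM aF aS v <= c.
Proof.
  intros Hf He0 Hb.
  assert (Heps : forall eps, 0 < eps <= e0 -> lin aE aM aF aS v <= c + C * eps).
  { intros eps Heps. eapply lin_closure; [| exact (Hf eps ltac:(lra) _ null4_empty)].
    intros y [w [Hw1 [Hw2 [_ ->]]]]. apply Hb; auto. }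
  apply Rnot_gt_le. intro Hgt.
  set (gap := lin aE aM aF aS v - c).
  set (eps := Rmin e0 (gap / (2 * (Rabs C + 1)))).
  assert (Hp : 0 < gap / (2 * (Rabs C + 1))) by (apply Rdiv_lt_0_compat; unfold gap; pose proof (Rabs_pos C); lra).
  assert (He : 0 < eps <= e0) by (unfold eps; split; [apply Rmin_glb_lt; lra | apply Rmin_l]).
  specialize (Heps eps He).
  assert (eps <= gap / (2 * (Rabs C + 1))) by apply Rmin_r.
  assert (C * eps <= Rabs C * eps) by (apply Rmult_le_compat_r; [lra | apply Rle_abs]).
  assert (Rabs C * eps <= gap / 2).
  { replace (gap / 2) with ((Rabs C + 1) * (gap / (2 * (Rabs C + 1)))) by (field; pose proof (Rabs_pos C); lra).
    apply Rmult_le_compat; pose proof (Rabs_pos C); lra. }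
  unfold gap in *. lra.
Qed.

Lemma filippov_lin_eq X z v aE aM aF aS C : filippov_set X z v ->
  (forall eps, 0 < eps <= 1 -> forall w, vnorm (vsub w z) <= eps -> in_D' w ->
      Rabs (lin aE aM aF aS (X w) - lin aE aM aF aS (X z)) <= C * eps) ->
  lin aE aM aF aS v = lin aE aM aF aS (X z).
Proof.
  intros Hf Hb. apply Rle_antisym.
  - apply (filippov_lin_bound X z v _ _ _ _ _ 1 C Hf ltac:(lra)).
    intros eps He w Hw HD. specialize (Hb eps He w Hw HD).
    pose proof (Rle_abs (lin aE aM aF aS (X w) - lin aE aM aF aS (X z))). lra.
  - enough (lin (- aE) (- aM) (- aF) (- aS) v <= - lin aE aM aF aS (X z)) by (rewrite lin_opp in H; lra).
    apply (filippov_lin_bound X z v _ _ _ _ _ 1 C Hf ltac:(lra)).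
    intros eps He w Hw HD. rewrite lin_opp. specialize (Hb eps He w Hw HD).
    rewrite <- Rabs_Ropp in Hb. pose proof (Rle_abs (- (lin aE aM aF aS (X w) - lin aE aM aF aS (X z)))). lra.
Qed.

Lemma in_dom_le Tmax s t : in_dom Tmax t -> 0 <= s <= t -> in_dom Tmax s.
Proof. unfold in_dom. destruct Tmax; intros [H1 H2] H3; split; lra || auto. Qed.

Lemma sol_in_D' X Tmax z t : filippov_sol X Tmax z -> in_dom Tmax t -> in_D' (z t).
Proof. intros [_ [H _]] Ht. auto. Qed.

Lemma sol_lin_lip X Tmax z aE aM aF aS T0 b : filippov_sol X Tmax z -> in_dom Tmax b ->
  0 <= T0 <= b -> lip_on T0 b (fun s => lin aE aM aF aS (z s)).
Proof.
  intros [_ [_ [HL _]]] Hb HT. destruct (HL b Hb) as [L HLb].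
  exists ((Rabs aE + Rabs aM + Rabs aF + Rabs aS) * L). intros s t Hs Ht.
  specialize (HLb s t ltac:(lra) ltac:(lra)).
  assert (Hn : 0 <= Rabs aE + Rabs aM + Rabs aF + Rabs aS)
    by (pose proof (Rabs_pos aE); pose proof (Rabs_pos aM); pose proof (Rabs_pos aF); pose proof (Rabs_pos aS); lra).
  assert (Hd : forall x y, Rabs (lin aE aM aF aS x - lin aE aM aF aS y)
                 <= (Rabs aE + Rabs aM + Rabs aF + Rabs aS) * vnorm (vsub x y)).
  { intros x y. unfold Rabs at 1. destruct Rcase_abs.
    - pose proof (lin_lipschitz aE aM aF aS y x).
      replace (vnorm (vsub x y)) with (vnorm (vsub y x)) by (unfold vnorm, vsub; simpl; f_equal; ring). lra.
    - apply lin_lipschitz. }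
  eapply Rle_trans; [apply Hd |]. rewrite Rmult_assoc. apply Rmult_le_compat_l; auto.
Qed.

Lemma sol_lin_deriv z t v aE aM aF aS : has_deriv4 z t v ->
  derivable_pt_lim (fun s => lin aE aM aF aS (z s)) t (lin aE aM aF aS v).
Proof.
  intros [DE [DM [DF DS]]]. unfold lin.
  repeat apply dpl_plus; apply dpl_scal; assumption.
Qed.

Lemma sol_coord_lip X Tmax z T0 b : filippov_sol X Tmax z -> in_dom Tmax b -> 0 <= T0 <= b ->
  lip_on T0 b (fun s => cE (z s)) /\ lip_on T0 b (fun s => cM (z s)) /\
  lip_on T0 b (fun s => cF (z s)) /\ lip_on T0 b (fun s => cMs (z s)).
Proof.
  intros Hsol Hb HT.
  pose proof (fun aE aM aF aS => sol_lin_lip X Tmax z aE aM aF aS T0 b Hsol Hb HT) as HL.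
  split; [| split; [| split]]; eapply lip_on_ext; [| apply (HL 1 0 0 0) | | apply (HL 0 1 0 0)
    | | apply (HL 0 0 1 0) | | apply (HL 0 0 0 1)]; intros s; cbv beta;
    [apply lin_E | apply lin_M | apply lin_F | apply lin_Ms].
Qed.

Lemma abs_lincomb4 c1 c2 c3 c4 x1 x2 x3 x4 e :
  Rabs x1 <= e -> Rabs x2 <= e -> Rabs x3 <= e -> Rabs x4 <= e ->
  Rabs (c1 * x1 + c2 * x2 + c3 * x3 + c4 * x4) <= (Rabs c1 + Rabs c2 + Rabs c3 + Rabs c4) * e.
Proof.
  intros.
  assert (T : forall c x, Rabs x <= e -> Rabs (c * x) <= Rabs c * e)
    by (intros; rewrite Rabs_mult; apply Rmult_le_compat_l; auto; apply Rabs_pos).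
  pose proof (T c1 x1 H). pose proof (T c2 x2 H0). pose proof (T c3 x3 H1). pose proof (T c4 x4 H2).
  pose proof (Rabs_triang (c1 * x1 + c2 * x2 + c3 * x3) (c4 * x4)).
  pose proof (Rabs_triang (c1 * x1 + c2 * x2) (c3 * x3)).
  pose proof (Rabs_triang (c1 * x1) (c2 * x2)). lra.
Qed.

(* The mating ratio [M / (M + g Ms)] lies in [0, 1] (it is 0 at the origin by
   Stdlib's convention for division by zero). *)
Lemma ratio_range g M Ms : 0 < g -> 0 <= M -> 0 <= Ms -> 0 <= M / (M + g * Ms) <= 1.
Proof.
  intros. destruct (Req_dec (M + g * Ms) 0) as [H2 | H2].
  - rewrite H2. unfold Rdiv. rewrite Rinv_0. lra.
  - assert (0 < M + g * Ms) by nra. split; [apply Rle_mult_inv_pos; lra |].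
    apply (Rmult_le_reg_r (M + g * Ms)); auto.
    replace (M / (M + g * Ms) * (M + g * Ms)) with M by (field; lra). nra.
Qed.

Lemma ratio_le g M Ms q : 0 < M + g * Ms -> M * (1 - q) <= q * g * Ms -> M / (M + g * Ms) <= q.
Proof.
  intros Hs H. apply (Rmult_le_reg_r (M + g * Ms)); auto.
  replace (M / (M + g * Ms) * (M + g * Ms)) with M by (field; lra). nra.
Qed.

Lemma ratio_local_lip g Mw Msw Mz Msz eps : 0 < g -> 0 <= Mz -> 0 <= Msz -> 0 < Mz + g * Msz ->
  Rabs (Mw - Mz) <= eps -> Rabs (Msw - Msz) <= eps -> eps <= (Mz + g * Msz) / (2 * (1 + g)) ->
  Rabs (Mw / (Mw + g * Msw) - Mz / (Mz + g * Msz)) <=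
    (2 * g * (Msz + Mz) / ((Mz + g * Msz) * (Mz + g * Msz))) * eps.
Proof.
  intros Hg HM HS Hs h2 h4 He.
  set (sz := Mz + g * Msz) in *. set (sw := Mw + g * Msw).
  assert (Hsw : sz / 2 <= sw).
  { assert ((1 + g) * eps <= sz / 2).
    { apply (Rmult_le_compat_l (1 + g)) in He; [| lra].
      replace ((1 + g) * (sz / (2 * (1 + g)))) with (sz / 2) in He by (field; lra). auto. }
    unfold sw, sz in *. revert h2 h4; unfold Rabs; repeat destruct Rcase_abs; nra. }
  replace (Mw / sw - Mz / sz)
    with ((g * ((Mw - Mz) * Msz - Mz * (Msw - Msz))) / (sw * sz)) by (unfold sw, sz in *; field; lra).
  unfold Rdiv. rewrite Rabs_mult, (Rabs_right (/ (sw * sz))) by (left; apply Rinv_0_lt_compat; nra).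
  assert (Hn : Rabs (g * ((Mw - Mz) * Msz - Mz * (Msw - Msz))) <= g * (Msz + Mz) * eps).
  { rewrite Rabs_mult, (Rabs_right g), Rmult_assoc by lra. apply Rmult_le_compat_l; [lra |].
    eapply Rle_trans; [apply Rabs_triang |].
    rewrite Rabs_Ropp, !Rabs_mult, (Rabs_right Msz), (Rabs_right Mz) by lra. nra. }
  assert (Hi : / (sw * sz) <= 2 * / (sz * sz)).
  { replace (2 * / (sz * sz)) with (/ ((sz / 2) * sz)) by (field; lra).
    apply Rinv_le_contravar; [nra | apply Rmult_le_compat_r; lra]. }
  apply Rle_trans with (g * (Msz + Mz) * eps * (2 * / (sz * sz))).
  - apply Rmult_le_compat; auto; [apply Rabs_pos | left; apply Rinv_0_lt_compat; nra].
  - right. field. lra.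
Qed.

Lemma ratio_excess_identity M S g k : 0 < g -> 0 < k -> 0 < M + g * S ->
  M / (M + g * S) - k / (k + g) = g * (M - k * S) / ((M + g * S) * (k + g)).
Proof. intros. field. lra. Qed.

Lemma ratio_excess_weighted M S g k : 0 <= M -> 0 <= S -> 0 < g -> 0 < k -> 0 < M + g * S ->
  M * (M / (M + g * S) - k / (k + g)) <= g / (k + g) * pos (M - k * S).
Proof.
  intros HM HS Hg Hk Hs. rewrite ratio_excess_identity by auto.
  replace (M * (g * (M - k * S) / ((M + g * S) * (k + g))))
    with (M / (M + g * S) * (g / (k + g) * (M - k * S))) by (field; lra).
  pose proof (ratio_range g M S Hg HM HS). pose proof (pos_ge (M - k * S)). pose proof (pos_nonneg (M - k * S)).
  assert (0 <= g / (k + g)) by (apply Rle_mult_inv_pos; lra).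
  assert (Hgp : g / (k + g) * (M - k * S) <= g / (k + g) * pos (M - k * S)) by (apply Rmult_le_compat_l; lra).
  assert (0 <= g / (k + g) * pos (M - k * S)) by (apply Rmult_le_pos; lra).
  destruct (Rle_dec 0 (g / (k + g) * (M - k * S))); [| nra].
  apply Rle_trans with (1 * (g / (k + g) * (M - k * S))); [apply Rmult_le_compat_r |]; lra.
Qed.

Lemma ratio_excess_bound E M S g k c dM :
  0 <= E -> 0 <= M -> 0 <= S -> 0 < g -> 0 < k -> 0 < c -> 0 < dM -> 0 < M + g * S ->
  E * (M / (M + g * S) - k / (k + g))
    <= pos (c * E - dM * M) / c + dM * g / (c * (k + g)) * pos (M - k * S).
Proof.
  intros HE HM HS Hg Hk Hc HdM Hs.
  set (x := M / (M + g * S) - k / (k + g)).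
  pose proof (pos_nonneg (c * E - dM * M)). pose proof (pos_nonneg (M - k * S)).
  assert (HP3 : 0 <= pos (c * E - dM * M) / c) by (apply Rle_mult_inv_pos; lra).
  assert (HP2 : 0 <= dM * g / (c * (k + g)) * pos (M - k * S))
    by (apply Rmult_le_pos; auto; apply Rle_mult_inv_pos; nra).
  destruct (Rle_dec x 0) as [Hx | Hx]; [nra | apply Rnot_le_lt in Hx].
  assert (Hx1 : x <= 1).
  { pose proof (ratio_range g M S Hg HM HS). assert (0 <= k / (k + g)) by (apply Rle_mult_inv_pos; lra).
    unfold x; lra. }
  assert (HEle : E <= pos (c * E - dM * M) / c + dM / c * M).
  { apply (Rmult_le_reg_r c); [lra |].
    replace ((pos (c * E - dM * M) / c + dM / c * M) * c) with (pos (c * E - dM * M) + dM * M)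
      by (field; lra). pose proof (pos_ge (c * E - dM * M)). lra. }
  pose proof (ratio_excess_weighted M S g k HM HS Hg Hk Hs) as HMx. fold x in HMx.
  assert (H3 : pos (c * E - dM * M) / c * x <= pos (c * E - dM * M) / c)
    by (rewrite <- (Rmult_1_r (pos (c * E - dM * M) / c)) at 2; apply Rmult_le_compat_l; lra).
  assert (H2 : dM / c * (M * x) <= dM / c * (g / (k + g) * pos (M - k * S)))
    by (apply Rmult_le_compat_l; [apply Rle_mult_inv_pos |]; lra).
  replace (dM * g / (c * (k + g)) * pos (M - k * S)) with (dM / c * (g / (k + g) * pos (M - k * S)))
    by (field; lra).
  apply Rle_trans with ((pos (c * E - dM * M) / c + dM / c * M) * x); [apply Rmult_le_compat_r; lra |].
  nra.
Qed.

Lemma pos_rate_bound c1 c2 x1 x2 y δ d : 0 <= c1 -> 0 <= c2 -> 0 <= δ ->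
  d <= c1 * pos x1 + c2 * pos x2 - δ * y ->
  2 * pos y * d <= c1 * (sqp x1 + sqp y) + c2 * (sqp x2 + sqp y).
Proof.
  intros H1 H2 Hδ Hd. unfold sqp.
  pose proof (pos_nonneg y). pose proof (pos_mul_self y). unfold sqp in H0.
  assert (2 * pos y * d <= 2 * pos y * (c1 * pos x1 + c2 * pos x2 - δ * y))
    by (apply Rmult_le_compat_l; lra).
  assert (0 <= δ * (pos y * y)) by (rewrite H0; apply Rmult_le_pos; nra).
  assert (0 <= c1 * ((pos x1 - pos y) * (pos x1 - pos y))) by (apply Rmult_le_pos; [lra | apply Rle_0_sqr]).
  assert (0 <= c2 * ((pos x2 - pos y) * (pos x2 - pos y))) by (apply Rmult_le_pos; [lra | apply Rle_0_sqr]).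
  nra.
Qed.

Lemma ratio_below_near g q mi S0 : 0 < g -> 0 < mi -> 0 < q < 1 -> mi * (1 - q) < q * g * S0 ->
  exists η, 0 < η /\ forall M Ms, 0 <= M <= mi + η -> S0 - η <= Ms ->
    0 < M + g * Ms /\ M / (M + g * Ms) <= q.
Proof.
  intros Hg Hmi Hq Hlt.
  set (η := (q * g * S0 - mi * (1 - q)) / (1 + g)).
  assert (Hη : 0 < η) by (apply Rdiv_lt_0_compat; lra).
  assert (Hηg : η * (1 + g) = q * g * S0 - mi * (1 - q)) by (unfold η; field; lra).
  exists η. split; auto. intros M Ms HM HMs.
  assert (HqMs : q * g * (S0 - η) <= q * g * Ms) by (apply Rmult_le_compat_l; nra).
  assert (Hmarg : (mi + η) * (1 - q) <= q * g * (S0 - η)).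
  { assert (η * ((1 - q) + q * g) <= η * (1 + g)) by (apply Rmult_le_compat_l; nra). nra. }
  assert (HM1 : M * (1 - q) <= (mi + η) * (1 - q)) by (apply Rmult_le_compat_r; lra).
  assert (Hs : 0 < M + g * Ms).
  { assert (0 < q * g * Ms) by nra.
    assert (0 < Ms).
    { apply Rnot_le_lt. intro Hn.
      assert (0 < q * g) by nra. nra. }
    nra. }
  split; auto. apply ratio_le; auto. lra.
Qed.

Section Model.

Variables (bE nE dE dM dF ds K nu g la : R).
Hypotheses (HbE : 0 < bE) (HnE : 0 < nE) (HdE : 0 < dE) (HdM : 0 < dM) (HdF : 0 < dF)
  (Hds : 0 < ds) (HK : 0 < K) (Hnu : 0 < nu < 1) (Hg : 0 < g).

Local Notation X := (Xcl bE nE dE dM dF ds K nu g la).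

(** [E], [M] and [Ms] have right-hand sides continuous on [D'], so their
    Filippov velocities are the classical ones; for [F] only the bounds coming
    from [0 <= M / (M + g Ms) <= 1] survive, and the classical value is
    recovered where [M + g Ms > 0]. *)

Definition admissible_velocity (z v : vec4) : Prop :=
  cE v = cE (X z) /\ cM v = cM (X z) /\ cMs v = cMs (X z) /\
  - dF * cF z <= cF v <= nu * nE * cE z - dF * cF z /\
  (0 < cM z + g * cMs z -> cF v <= cF (X z)).

Lemma velocity_E z v : filippov_set X z v -> cE v = cE (X z).
Proof.
  intros Hf.
  rewrite <- !lin_E.
  apply (filippov_lin_eq X z v 1 0 0 0
    (Rabs (bE * (1 - cE z / K)) + Rabs (- (bE * cF z / K)) + Rabs (- (bE / K)) + Rabs (- (nE + dE))) Hf).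
  intros eps He w Hw HD. destruct (near_coords w z eps Hw) as [h1 [h2 [h3 h4]]].
  assert (Hp : Rabs ((cF w - cF z) * (cE w - cE z)) <= eps).
  { rewrite Rabs_mult. apply Rle_trans with (eps * eps); [| nra].
    apply Rmult_le_compat; auto; apply Rabs_pos. }
  assert (Heq : cE (X w) - cE (X z) =
    (bE * (1 - cE z / K)) * (cF w - cF z) + (- (bE * cF z / K)) * (cE w - cE z) +
    (- (bE / K)) * ((cF w - cF z) * (cE w - cE z)) + (- (nE + dE)) * (cE w - cE z))
    by (unfold Xcl; cbn [cE]; field; lra).
  rewrite !lin_E, Heq. apply abs_lincomb4; auto.
Qed.

Lemma velocity_M z v : filippov_set X z v -> cM v = cM (X z).
Proof.
  intros Hf.
  rewrite <- !lin_M.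
  apply (filippov_lin_eq X z v 0 1 0 0 (Rabs ((1 - nu) * nE) + Rabs (- dM) + Rabs 0 + Rabs 0) Hf).
  intros eps He w Hw HD. destruct (near_coords w z eps Hw) as [h1 [h2 [h3 h4]]].
  assert (Heq : cM (X w) - cM (X z) =
    ((1 - nu) * nE) * (cE w - cE z) + (- dM) * (cM w - cM z) + 0 * 0 + 0 * 0)
    by (unfold Xcl; cbn [cM]; ring).
  rewrite !lin_M, Heq. apply abs_lincomb4; auto; rewrite Rabs_R0; lra.
Qed.

Lemma velocity_Ms z v : filippov_set X z v -> cMs v = cMs (X z).
Proof.
  intros Hf.
  rewrite <- !lin_Ms.
  apply (filippov_lin_eq X z v 0 0 0 1 (Rabs la + Rabs (- ds) + Rabs 0 + Rabs 0) Hf).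
  intros eps He w Hw HD. destruct (near_coords w z eps Hw) as [h1 [h2 [h3 h4]]].
  assert (Heq : cMs (X w) - cMs (X z) =
    la * (cM w - cM z) + (- ds) * (cMs w - cMs z) + 0 * 0 + 0 * 0)
    by (unfold Xcl; cbn [cMs]; ring).
  rewrite !lin_Ms, Heq. apply abs_lincomb4; auto; rewrite Rabs_R0; lra.
Qed.

Lemma velocity_F_bounds z v : filippov_set X z v ->
  - dF * cF z <= cF v <= nu * nE * cE z - dF * cF z.
Proof.
  intros Hf. split.
  - enough (H : lin 0 0 (-1) 0 v <= dF * cF z) by (unfold lin in H; lra).
    apply (filippov_lin_bound X z v _ _ _ _ _ 1 (Rabs dF) Hf ltac:(lra)).
    intros eps He w Hw [HE [HM [HF HS]]]. destruct (near_coords w z eps Hw) as [h1 [h2 [h3 h4]]].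
    pose proof (ratio_range g (cM w) (cMs w) Hg HM HS).
    assert (0 <= nu * nE * cE w * (cM w / (cM w + g * cMs w)))
      by (apply Rmult_le_pos; [repeat apply Rmult_le_pos |]; lra).
    assert (dF * (cF w - cF z) <= Rabs dF * eps)
      by (eapply Rle_trans; [apply Rle_abs | rewrite Rabs_mult; apply Rmult_le_compat_l; auto; apply Rabs_pos]).
    unfold lin, Xcl; cbn [cE cM cF cMs]. lra.
  - enough (H : lin 0 0 1 0 v <= nu * nE * cE z - dF * cF z) by (unfold lin in H; lra).
    apply (filippov_lin_bound X z v _ _ _ _ _ 1 (Rabs (nu * nE) + Rabs dF) Hf ltac:(lra)).
    intros eps He w Hw [HE [HM [HF HS]]]. destruct (near_coords w z eps Hw) as [h1 [h2 [h3 h4]]].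
    pose proof (ratio_range g (cM w) (cMs w) Hg HM HS).
    assert (nu * nE * cE w * (cM w / (cM w + g * cMs w)) <= nu * nE * cE w).
    { rewrite <- (Rmult_1_r (nu * nE * cE w)) at 2.
      apply Rmult_le_compat_l; [repeat apply Rmult_le_pos | ]; lra. }
    assert (T : forall c x, Rabs x <= eps -> c * x <= Rabs c * eps)
      by (intros c x Hx; eapply Rle_trans; [apply Rle_abs | rewrite Rabs_mult;
          apply Rmult_le_compat_l; auto; apply Rabs_pos]).
    rewrite <- Rabs_Ropp in h3. replace (- (cF w - cF z)) with (cF z - cF w) in h3 by ring.
    pose proof (T (nu * nE) _ h1). pose proof (T dF _ h3).
    unfold lin, Xcl; cbn [cE cM cF cMs]. lra.
Qed.

Lemma velocity_F_classical z v : in_D' z -> 0 < cM z + g * cMs z -> filippov_set X z v ->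
  cF v <= cF (X z).
Proof.
  intros [HEz [HMz [HFz HSz]]] Hs Hf.
  set (K1 := 2 * g * (cMs z + cM z) / ((cM z + g * cMs z) * (cM z + g * cMs z))).
  enough (H : lin 0 0 1 0 v <= cF (X z)) by (unfold lin in H; lra).
  apply (filippov_lin_bound X z v _ _ _ _ _ ((cM z + g * cMs z) / (2 * (1 + g)))
     (nu * nE * (1 + cE z * K1) + Rabs dF) Hf ltac:(apply Rdiv_lt_0_compat; lra)).
  intros eps He w Hw [HE [HM [HF HS]]]. destruct (near_coords w z eps Hw) as [h1 [h2 [h3 h4]]].
  pose proof (ratio_range g (cM w) (cMs w) Hg HM HS) as Hqw.
  pose proof (ratio_local_lip g (cM w) (cMs w) (cM z) (cMs z) eps Hg HMz HSz Hs h2 h4 (proj2 He)) as Hq.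
  fold K1 in Hq. unfold lin, Xcl; cbn [cE cM cF cMs].
  set (qw := cM w / (cM w + g * cMs w)) in *. set (qz := cM z / (cM z + g * cMs z)) in *.
  assert (H1 : cE w * qw - cE z * qz <= eps + cE z * (K1 * eps)).
  { replace (cE w * qw - cE z * qz) with ((cE w - cE z) * qw + cE z * (qw - qz)) by ring.
    pose proof (Rle_abs (qw - qz)). pose proof (Rle_abs (cE w - cE z)).
    assert ((cE w - cE z) * qw <= eps) by (revert h1; unfold Rabs; destruct Rcase_abs; nra).
    assert (cE z * (qw - qz) <= cE z * (K1 * eps)) by (apply Rmult_le_compat_l; lra). lra. }
  assert (- dF * (cF w - cF z) <= Rabs dF * eps).
  { eapply Rle_trans; [apply Rle_abs |]. rewrite Rabs_mult, Rabs_Ropp.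
    apply Rmult_le_compat_l; auto; apply Rabs_pos. }
  assert (nu * nE * (cE w * qw - cE z * qz) <= nu * nE * (eps + cE z * (K1 * eps)))
    by (apply Rmult_le_compat_l; [nra | lra]).
  nra.
Qed.

Lemma filippov_admissible z v : in_D' z -> filippov_set X z v -> admissible_velocity z v.
Proof.
  intros HD Hf. split; [| split; [| split; [| split]]].
  - apply velocity_E; auto.
  - apply velocity_M; auto.
  - apply velocity_Ms; auto.
  - apply velocity_F_bounds; auto.
  - intros Hs. apply velocity_F_classical; auto.
Qed.

(** Under [R0 > 1] the threshold [kappa_bar] is positive, it is the unique
    [k] with [bE nu nE k / (k + g) = dF (nE + dE)] (the ratio at which each
    egg is exactly replaced), and the assumption on [la] reads [ds < k la]. *)

Hypothesis HR0 : 1 < calR0 bE nE dE dF nu.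
Hypothesis Hla : (bE * nu * nE - (nE + dE) * dF) * ds / (g * (nE + dE) * dF) < la.

Local Notation kap := (kappa_bar bE nE dE dF nu g).

Lemma R0_excess : 0 < bE * nu * nE - dF * (nE + dE).
Proof.
  unfold calR0 in HR0. apply (Rmult_lt_compat_r (dF * (nE + dE))) in HR0; [| nra].
  replace (bE * nu * nE / (dF * (nE + dE)) * (dF * (nE + dE))) with (bE * nu * nE) in HR0
    by (field; lra). lra.
Qed.

Lemma kappa_pos : 0 < kap.
Proof.
  pose proof R0_excess. unfold kappa_bar.
  apply Rdiv_lt_0_compat; [repeat apply Rmult_lt_0_compat |]; lra.
Qed.

Lemma kappa_identity : bE * nu * nE * kap = dF * (nE + dE) * (kap + g).
Proof. pose proof R0_excess. unfold kappa_bar. field. lra. Qed.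

Lemma kappa_lambda : ds < kap * la.
Proof.
  pose proof R0_excess.
  assert (Hp : 0 < g * (nE + dE) * dF) by (repeat apply Rmult_lt_0_compat; lra).
  apply (Rmult_lt_compat_r (g * (nE + dE) * dF)) in Hla; auto.
  replace ((bE * nu * nE - (nE + dE) * dF) * ds / (g * (nE + dE) * dF) * (g * (nE + dE) * dF))
    with ((bE * nu * nE - dF * (nE + dE)) * ds) in Hla by (field; lra).
  apply (Rmult_lt_reg_r (bE * nu * nE - dF * (nE + dE))); auto.
  unfold kappa_bar.
  replace (g * dF * (nE + dE) / (bE * nu * nE - dF * (nE + dE)) * la * (bE * nu * nE - dF * (nE + dE)))
    with (la * (g * (nE + dE) * dF)) by (field; lra).
  lra.
Qed.

(* The limiting ratio [ds / (ds + g la)] of a male population at equilibrium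
   with its sterile companions lies strictly below the threshold. *)
Lemma threshold_ratio_gap :
  0 < ds / (ds + g * la) < kap / (kap + g) /\ kap / (kap + g) < 1.
Proof.
  pose proof kappa_pos as Hk. pose proof kappa_lambda as Hkl.
  assert (Hla0 : 0 < la) by nra.
  split; [split |].
  - apply Rdiv_lt_0_compat; nra.
  - apply (Rmult_lt_reg_r ((ds + g * la) * (kap + g))); [apply Rmult_lt_0_compat; nra |].
    replace (ds / (ds + g * la) * ((ds + g * la) * (kap + g))) with (ds * (kap + g)) by (field; nra).
    replace (kap / (kap + g) * ((ds + g * la) * (kap + g))) with (kap * (ds + g * la)) by (field; lra).
    nra.
  - apply (Rmult_lt_reg_r (kap + g)); [lra |].
    replace (kap / (kap + g) * (kap + g)) with kap by (field; lra). lra.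
Qed.

Definition lyap (z : vec4) : R :=
  sqp (cE (X z)) + sqp (cM z - kap * cMs z) + sqp (cM (X z)).

Definition lyap_rate (z v : vec4) : R :=
  2 * pos (cE (X z)) *
    (bE * cF v * (1 - cE z / K) + bE * cF z * (- (cE v / K)) - (nE + dE) * cE v)
  + 2 * pos (cM z - kap * cMs z) * (cM v - kap * cMs v)
  + 2 * pos (cM (X z)) * ((1 - nu) * nE * cE v - dM * cM v).

Lemma lyap_deriv z t v : has_deriv4 z t v ->
  derivable_pt_lim (fun s => lyap (z s)) t (lyap_rate (z t) v).
Proof.
  intros [DE [DM [DF DS]]]. unfold lyap, lyap_rate, Xcl. cbn [cE cM].
  eapply dpl_eq.
  - repeat first [ exact DE | exact DM | exact DF | exact DS
                 | apply dpl_minus | apply dpl_plus | apply dpl_scal | apply dpl_divc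
                 | apply dpl_const | apply (dpl_comp sqp); [| apply dpl_sqp] | apply dpl_mult ].
  - cbv beta. ring.
Qed.

Lemma Mset_lyap z : Mset bE nE dE dM K nu kap z -> lyap z = 0.
Proof.
  intros [[_ T1] [[_ T2] [_ T3]]]. unfold lyap, Xcl. cbn [cE cM].
  rewrite !sqp_of_nonpos; lra.
Qed.

Lemma lyap_Mset z : in_D' z -> lyap z <= 0 -> Mset bE nE dE dM K nu kap z.
Proof.
  intros HD Hl. unfold lyap in Hl.
  pose proof (sqp_nonneg (cE (X z))). pose proof (sqp_nonneg (cM z - kap * cMs z)).
  pose proof (sqp_nonneg (cM (X z))).
  assert (T1 : cE (X z) <= 0) by (apply sqp_nonpos_inv; lra).
  assert (T2 : cM z - kap * cMs z <= 0) by (apply sqp_nonpos_inv; lra).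
  assert (T3 : cM (X z) <= 0) by (apply sqp_nonpos_inv; lra).
  unfold Xcl in T1, T3; cbn [cE cM] in T1, T3.
  split; [| split]; split; auto; lra.
Qed.

(* Gains of the two defects controlling the growth of [E']. *)
Definition gain_M : R := bE * nu * nE / ((1 - nu) * nE).
Definition gain_ratio : R := bE * nu * nE * dM * g / ((1 - nu) * nE * (kap + g)).

Lemma gains_nonneg : 0 <= gain_M /\ 0 <= gain_ratio.
Proof.
  pose proof kappa_pos. unfold gain_M, gain_ratio.
  split; apply Rle_mult_inv_pos; try (repeat apply Rmult_le_pos; lra); try nra.
  apply Rmult_lt_0_compat; nra.
Qed.

Lemma laying_ratio_bound z v : in_D' z -> admissible_velocity z v ->
  exists q, 0 <= q /\ cF v <= nu * nE * cE z * q - dF * cF z /\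
    bE * nu * nE * (cE z * (q - kap / (kap + g)))
      <= gain_M * pos (cM (X z)) + gain_ratio * pos (cM z - kap * cMs z).
Proof.
  intros [HE [HM [HF HS]]] [_ [_ [_ [[_ Hup] Hclass]]]].
  pose proof kappa_pos as Hk. pose proof gains_nonneg as [Hg3 Hg2].
  assert (HmX : cM (X z) = (1 - nu) * nE * cE z - dM * cM z) by reflexivity.
  destruct (Rlt_dec 0 (cM z + g * cMs z)) as [Hs | Hs].
  - exists (cM z / (cM z + g * cMs z)). split; [apply Rle_mult_inv_pos; lra |]. split.
    + apply Hclass in Hs. unfold Xcl in Hs. cbn [cF] in Hs. exact Hs.
    + pose proof (ratio_excess_bound (cE z) (cM z) (cMs z) g kap ((1 - nu) * nE) dM
        HE HM HS Hg Hk ltac:(nra) HdM Hs) as Hexc.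
      rewrite <- HmX in Hexc.
      apply (Rmult_le_compat_l (bE * nu * nE)) in Hexc; [| repeat apply Rmult_le_pos; lra].
      unfold gain_M, gain_ratio. eapply Rle_trans; [exact Hexc |]. right. field. split; nra.
  - (* no wild males: [M = Ms = 0], and [q = 1] works since then [M' = c E] *)
    assert (HM0 : cM z = 0) by nra.
    exists 1. split; [lra |]. split; [lra |].
    assert (Hq1 : 0 <= kap / (kap + g)) by (apply Rle_mult_inv_pos; lra).
    assert (0 <= (1 - nu) * nE * cE z) by (repeat apply Rmult_le_pos; lra).
    assert (HgM : pos (cM (X z)) = (1 - nu) * nE * cE z)
      by (rewrite HmX, HM0; unfold pos; rewrite Rmax_left; lra).
    assert (gain_M * pos (cM (X z)) = bE * nu * nE * cE z)
      by (rewrite HgM; unfold gain_M; field; nra).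
    pose proof (pos_nonneg (cM z - kap * cMs z)).
    assert (0 <= bE * nu * nE * (cE z * (kap / (kap + g))))
      by (apply Rmult_le_pos; [repeat apply Rmult_le_pos | apply Rmult_le_pos]; lra).
    nra.
Qed.

(* Bound on the egg-laying part of the derivative of [E']: beyond the
   carrying capacity it is negative; below it, the threshold identity turns
   [laying_ratio_bound] into a bound by the defects. *)
Lemma F_rate_bound z v : in_D' z -> admissible_velocity z v ->
  bE * (1 - cE z / K) * cF v
    <= gain_M * pos (cM (X z)) + gain_ratio * pos (cM z - kap * cMs z) - dF * cE (X z).
Proof.
  intros HD Hv. pose proof (laying_ratio_bound z v HD Hv) as [q [Hq0 [Hvq Hexc]]].
  destruct HD as [HE [HM [HF HS]]]. destruct Hv as [_ [_ [_ [[Hlow _] _]]]].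
  pose proof kappa_pos as Hk. pose proof gains_nonneg as [Hg3 Hg2].
  assert (HgX : cE (X z) = bE * cF z * (1 - cE z / K) - (nE + dE) * cE z) by reflexivity.
  set (R := gain_M * pos (cM (X z)) + gain_ratio * pos (cM z - kap * cMs z)) in *.
  assert (HR : 0 <= R) by (unfold R; pose proof (pos_nonneg (cM (X z)));
    pose proof (pos_nonneg (cM z - kap * cMs z)); nra).
  assert (HaE : 0 <= dF * (nE + dE) * cE z) by (repeat apply Rmult_le_pos; lra).
  destruct (Rle_dec (1 - cE z / K) 0) as [Hn | Hp].
  - assert (bE * (1 - cE z / K) * cF v <= bE * (1 - cE z / K) * (- dF * cF z))
      by (apply Rmult_le_compat_neg_l; nra).
    nra.
  - apply Rnot_le_lt in Hp.
    assert (HKE : 1 - cE z / K <= 1) by (pose proof (Rle_mult_inv_pos (cE z) K HE HK); unfold Rdiv; lra).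
    assert (Hthr : bE * nu * nE * (kap / (kap + g)) = dF * (nE + dE)).
    { apply (Rmult_eq_reg_r (kap + g)); [| lra].
      replace (bE * nu * nE * (kap / (kap + g)) * (kap + g)) with (bE * nu * nE * kap) by (field; lra).
      rewrite kappa_identity. ring. }
    assert (bE * (1 - cE z / K) * cF v <= bE * (1 - cE z / K) * (nu * nE * cE z * q - dF * cF z))
      by (apply Rmult_le_compat_l; nra).
    assert (0 <= nu * nE * cE z * q) by (repeat apply Rmult_le_pos; lra).
    assert (bE * (1 - cE z / K) * (nu * nE * cE z * q) <= bE * (nu * nE * cE z * q))
      by (assert (bE * (1 - cE z / K) <= bE) by nra; nra).
    rewrite HgX. nra.
Qed.

Definition lyap_const : R := gain_M + gain_ratio + (1 - nu) * nE + 1.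

Lemma lyap_rate_bound z v : in_D' z -> admissible_velocity z v ->
  lyap_rate z v <= lyap_const * lyap z.
Proof.
  intros HD Hv. pose proof (F_rate_bound z v HD Hv) as HF.
  destruct HD as [HE [HM [HF' HS]]]. destruct Hv as [HvE [HvM [HvS [[Hlow Hup] _]]]].
  pose proof kappa_pos as Hk. pose proof kappa_lambda as Hkl. pose proof gains_nonneg as [Hg3 Hg2].
  set (g1 := cE (X z)) in *. set (g2 := cM z - kap * cMs z) in *. set (g3 := cM (X z)) in *.
  assert (Hg1 : g1 = bE * cF z * (1 - cE z / K) - (nE + dE) * cE z) by reflexivity.
  assert (Hg3' : g3 = (1 - nu) * nE * cE z - dM * cM z) by reflexivity.
  assert (HvS' : cMs v = la * cM z - ds * cMs z) by exact HvS.
  assert (HvM' : cM v = g3) by exact HvM.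
  (* E-defect: its rate is [F_rate_bound] minus a nonnegative multiple of g1 *)
  assert (T1 : 2 * pos g1 * (bE * cF v * (1 - cE z / K) + bE * cF z * (- (cE v / K)) - (nE + dE) * cE v)
               <= gain_M * (sqp g3 + sqp g1) + gain_ratio * (sqp g2 + sqp g1)).
  { apply pos_rate_bound with (δ := dF + bE * cF z / K + (nE + dE)); auto.
    - assert (0 <= bE * cF z / K) by (apply Rle_mult_inv_pos; nra). lra.
    - rewrite HvE. fold g1.
      replace (bE * cF v * (1 - cE z / K)) with (bE * (1 - cE z / K) * cF v) by ring.
      replace (bE * cF z * - (g1 / K)) with (- (bE * cF z / K * g1)) by (unfold Rdiv; ring). lra. }
  (* M-to-Ms defect: its rate is at most g3 - ds g2 since ds < kap la *)
  assert (T2 : 2 * pos g2 * (cM v - kap * cMs v) <= 1 * (sqp g3 + sqp g2) + 0 * (sqp g3 + sqp g2)).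
  { apply (pos_rate_bound 1 0 g3 g3 g2 ds); try lra.
    rewrite HvM', HvS'. unfold g2. pose proof (pos_ge g3).
    assert (0 <= (kap * la - ds) * cM z) by (apply Rmult_le_pos; lra). nra. }
  (* M-defect: [g3' = c g1 - dM g3] *)
  assert (T3 : 2 * pos g3 * ((1 - nu) * nE * cE v - dM * cM v)
               <= (1 - nu) * nE * (sqp g1 + sqp g3) + 0 * (sqp g1 + sqp g3)).
  { assert (Hc : 0 <= (1 - nu) * nE) by nra.
    apply (pos_rate_bound ((1 - nu) * nE) 0 g1 g1 g3 dM); try lra.
    rewrite HvE, HvM'.
    assert ((1 - nu) * nE * g1 <= (1 - nu) * nE * pos g1) by (apply Rmult_le_compat_l; auto using pos_ge).
    lra. }
  pose proof (sqp_nonneg g1). pose proof (sqp_nonneg g2). pose proof (sqp_nonneg g3).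
  unfold lyap_rate, lyap, lyap_const. fold g1 g2 g3.
  assert (gain_M * (sqp g3 + sqp g1) <= gain_M * (sqp g1 + sqp g2 + sqp g3)) by (apply Rmult_le_compat_l; lra).
  assert (gain_ratio * (sqp g2 + sqp g1) <= gain_ratio * (sqp g1 + sqp g2 + sqp g3)) by (apply Rmult_le_compat_l; lra).
  assert ((1 - nu) * nE * (sqp g1 + sqp g3) <= (1 - nu) * nE * (sqp g1 + sqp g2 + sqp g3)) by (apply Rmult_le_compat_l; nra).
  nra.
Qed.

Section Trajectory.

Variables (Tmax : option R) (z : R -> vec4).
Hypothesis Hsol : filippov_sol X Tmax z.

Lemma traj_velocity : exists Nt, null1 Nt /\
  forall t, 0 < t -> in_dom Tmax t -> ~ Nt t ->
    exists v, has_deriv4 z t v /\ admissible_velocity (z t) v.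
Proof.
  destruct Hsol as [_ [_ [_ [Nt [HNt Hder]]]]]. exists Nt. split; auto.
  intros t Ht Hdt HNt'. destruct (Hder t Ht Hdt HNt') as [v [Hd Hf]].
  exists v. split; auto. apply filippov_admissible; auto. apply (sol_in_D' X Tmax); auto.
Qed.

Lemma traj_lin_nonincreasing aE aM aF aS t1 t2 : 0 <= t1 <= t2 -> in_dom Tmax t2 ->
  (forall t v, 0 < t -> in_dom Tmax t -> admissible_velocity (z t) v -> lin aE aM aF aS v <= 0) ->
  lin aE aM aF aS (z t2) <= lin aE aM aF aS (z t1).
Proof.
  intros H12 Ht2 Hrate. destruct traj_velocity as [Nt [HNt Hder]].
  apply (lip_nonincreasing (fun s => lin aE aM aF aS (z s)) t1 t2 Nt); auto; [lra | |].
  - apply (sol_lin_lip X Tmax); auto.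
  - intros s Hs HNs. assert (Hdom : in_dom Tmax s) by (apply (in_dom_le _ _ t2); auto; lra).
    destruct (Hder s ltac:(lra) Hdom HNs) as [v [Hd Hv]].
    exists (lin aE aM aF aS v). split; [apply sol_lin_deriv; auto | apply (Hrate s v); auto; lra].
Qed.

(* Positive invariance: [lyap] vanishes initially and satisfies a Grönwall inequality. *)
Lemma traj_in_M : Mset bE nE dE dM K nu kap (z 0) ->
  forall t, in_dom Tmax t -> Mset bE nE dE dM K nu kap (z t).
Proof.
  intros Hz0 t Ht. assert (Ht0 : 0 <= t) by (destruct Ht; auto).
  apply lyap_Mset; [apply (sol_in_D' X Tmax); auto |].
  destruct traj_velocity as [Nt [HNt Hder]].
  apply (lip_gronwall (fun s => lyap (z s)) 0 t Nt lyap_const); auto.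
  - destruct (sol_coord_lip X Tmax z 0 t Hsol Ht ltac:(lra)) as [LE [LM [LF LS]]].
    unfold lyap, Xcl. cbn [cE cM].
    repeat first [ exact LE | exact LM | exact LF | exact LS
                 | apply lip_on_minus | apply lip_on_plus | apply lip_on_scal | apply lip_on_divc
                 | apply lip_on_const | apply (lip_on_comp _ _ sqp); [lra | apply sqp_loc_lip |]
                 | apply lip_on_mult; [lra | |] ].
  - rewrite Mset_lyap; auto. lra.
  - intros s Hs HNs. assert (Hdom : in_dom Tmax s) by (apply (in_dom_le _ _ t); auto; lra).
    destruct (Hder s ltac:(lra) Hdom HNs) as [v [Hd Hv]].
    exists (lyap_rate (z s) v). split; [apply lyap_deriv; auto |].
    apply lyap_rate_bound; auto. apply (sol_in_D' X Tmax); auto.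
Qed.

Hypothesis Hz0 : Mset bE nE dE dM K nu kap (z 0).

(* Inside the invariant set [E' <= 0] and [M' <= 0]. *)
Lemma traj_E_nonincreasing t1 t2 : 0 <= t1 <= t2 -> in_dom Tmax t2 -> cE (z t2) <= cE (z t1).
Proof.
  intros H12 Ht2. rewrite <- !lin_E. apply traj_lin_nonincreasing; auto.
  intros t v Ht Hdt [HvE _]. rewrite lin_E, HvE.
  destruct (traj_in_M Hz0 t Hdt) as [[_ T1] _]. unfold Xcl; cbn [cE]. lra.
Qed.

Lemma traj_M_nonincreasing t1 t2 : 0 <= t1 <= t2 -> in_dom Tmax t2 -> cM (z t2) <= cM (z t1).
Proof.
  intros H12 Ht2. rewrite <- !lin_M. apply traj_lin_nonincreasing; auto.
  intros t v Ht Hdt [_ [HvM _]]. rewrite lin_M, HvM.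
  destruct (traj_in_M Hz0 t Hdt) as [_ [_ [_ T3]]]. unfold Xcl; cbn [cM]. lra.
Qed.

(* Since [M] decreases, [Ms' <= la M(0) - ds Ms] keeps [Ms] below the larger
   of its initial value and its equilibrium level [la M(0) / ds]. *)
Lemma traj_Ms_bound t : in_dom Tmax t -> cMs (z t) <= Rmax (cMs (z 0)) (la * cM (z 0) / ds).
Proof.
  intros Ht. assert (Ht0 : 0 <= t) by (destruct Ht; auto).
  set (B := Rmax (cMs (z 0)) (la * cM (z 0) / ds)).
  assert (Hla0 : 0 < la) by (pose proof kappa_lambda; pose proof kappa_pos; nra).
  destruct traj_velocity as [Nt [HNt Hder]].
  enough (HV : sqp (cMs (z t) - B) <= 0) by (apply sqp_nonpos_inv in HV; lra).
  apply (lip_gronwall (fun s => sqp (cMs (z s) - B)) 0 t Nt 0); auto.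
  - destruct (sol_coord_lip X Tmax z 0 t Hsol Ht ltac:(lra)) as [_ [_ [_ LS]]].
    apply (lip_on_comp _ _ sqp); auto using sqp_loc_lip, lip_on_minus, lip_on_const.
  - rewrite sqp_of_nonpos; [lra |]. unfold B. pose proof (Rmax_l (cMs (z 0)) (la * cM (z 0) / ds)). lra.
  - intros s Hs HNs. assert (Hdom : in_dom Tmax s) by (apply (in_dom_le _ _ t); auto; lra).
    destruct (Hder s ltac:(lra) Hdom HNs) as [v [[_ [_ [_ DS]]] [_ [_ [HvS _]]]]].
    eexists. split.
    + apply (dpl_comp sqp); [apply dpl_minus; [exact DS | apply dpl_const] | apply dpl_sqp].
    + pose proof (traj_M_nonincreasing 0 s ltac:(lra) Hdom).
      assert (la * cM (z s) <= ds * B).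
      { unfold B. pose proof (Rmax_r (cMs (z 0)) (la * cM (z 0) / ds)).
        assert (la * cM (z 0) = ds * (la * cM (z 0) / ds)) by (field; lra). nra. }
      assert (Hrate : cMs v - 0 <= 0 * pos B + 0 * pos B - ds * (cMs (z s) - B))
        by (rewrite HvS; unfold Xcl; cbn [cMs]; lra).
      pose proof (pos_rate_bound 0 0 B B (cMs (z s) - B) ds (cMs v - 0) ltac:(lra) ltac:(lra) ltac:(lra) Hrate).
      lra.
Qed.

End Trajectory.

(* In the invariant set, far from the carrying capacity, the females are
   controlled by the eggs: [bE F / 2 <= bE F (1 - E/K) <= (nE + dE) E]. *)
Lemma Mset_F_bound z : Mset bE nE dE dM K nu kap z -> cE z <= K / 2 ->
  cF z <= 2 * (nE + dE) / bE * cE z.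
Proof.
  intros [[[HE [_ [HF _]]] HT1] _] HEK.
  assert (HEK' : cE z / K <= 1 / 2).
  { apply (Rmult_le_reg_r K); auto. replace (cE z / K * K) with (cE z) by (field; lra). lra. }
  assert (bE * cF z * (1 / 2) <= bE * cF z * (1 - cE z / K)) by (apply Rmult_le_compat_l; nra).
  apply (Rmult_le_reg_r bE); auto.
  replace (2 * (nE + dE) / bE * cE z * bE) with (2 * ((nE + dE) * cE z)) by (field; lra). lra.
Qed.

Lemma stability eps : 0 < eps -> exists d, 0 < d /\
  forall Tmax z, filippov_sol X Tmax z -> Mset bE nE dE dM K nu kap (z 0) -> vnorm (z 0) < d ->
    forall t, 0 < t -> in_dom Tmax t -> vnorm (z t) < eps.
Proof.
  intros Heps.
  assert (Hla0 : 0 < la) by (pose proof kappa_lambda; pose proof kappa_pos; nra).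
  set (cF' := 2 * (nE + dE) / bE). set (cS := la / ds).
  assert (HcF : 0 < cF') by (apply Rdiv_lt_0_compat; lra).
  assert (HcS : 0 < cS) by (apply Rdiv_lt_0_compat; lra).
  set (C := 3 + cF' + cS).
  set (d := Rmin (K / 2) (eps / C)).
  assert (Hd : 0 < d) by (apply Rmin_glb_lt; [lra | apply Rdiv_lt_0_compat; unfold C; lra]).
  exists d. split; auto. intros Tmax z Hsol Hz0 Hn0 t Ht Hdt.
  assert (Hd1 : d <= K / 2) by apply Rmin_l.
  assert (HCd : C * d <= eps).
  { replace eps with (C * (eps / C)) by (field; unfold C; lra).
    apply Rmult_le_compat_l; [unfold C; lra | apply Rmin_r]. }
  destruct (coord_le_vnorm (z 0)) as [c1 [c2 [_ c4]]].
  pose proof Hz0 as [[[E0 [M0 [F0 S0]]] _] _].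
  rewrite Rabs_right in c1, c2, c4 by lra.
  pose proof (traj_in_M Tmax z Hsol Hz0 t Hdt) as Hzt.
  pose proof Hzt as [[[Et [Mt [Ft St]]] _] _].
  pose proof (traj_E_nonincreasing Tmax z Hsol Hz0 0 t ltac:(lra) Hdt).
  pose proof (traj_M_nonincreasing Tmax z Hsol Hz0 0 t ltac:(lra) Hdt).
  pose proof (traj_Ms_bound Tmax z Hsol Hz0 t Hdt) as HS.
  assert (HF : cF (z t) <= cF' * d).
  { eapply Rle_trans; [apply Mset_F_bound; [exact Hzt | lra] |]. apply Rmult_le_compat_l; lra. }
  assert (HS' : cMs (z t) <= d + cS * d).
  { eapply Rle_trans; [exact HS |]. apply Rmax_lub; [assert (0 <= cS * d) by nra; lra |].
    replace (la * cM (z 0) / ds) with (cS * cM (z 0)) by (unfold cS; field; lra).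
    assert (cS * cM (z 0) <= cS * d) by (apply Rmult_le_compat_l; lra). lra. }
  eapply Rle_lt_trans; [apply vnorm_le_l1 |].
  rewrite !Rabs_right by lra. unfold C in HCd. nra.
Qed.

(** If the limit of [E] were positive, [M] and then [Ms] would stay
    bounded below, pushing the mating ratio [M / (M + g Ms)] eventually under a
    level [q1] strictly below the threshold [kap / (kap + g)]; then [F] and
    hence [E'] would eventually be uniformly negative, which is impossible for
    the nonnegative [E]. *)

Section GlobalTrajectory.

Variable z : R -> vec4.
Hypothesis Hsol : filippov_sol X None z.
Hypothesis Hz0 : Mset bE nE dE dM K nu kap (z 0).

Lemma glob_dom t : 0 <= t -> in_dom None t.
Proof. intros; split; auto. Qed.

Lemma glob_in_M t : 0 <= t -> Mset bE nE dE dM K nu kap (z t).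
Proof. intros Ht. apply (traj_in_M None z Hsol Hz0 t (glob_dom t Ht)). Qed.

Lemma glob_in_D' t : 0 <= t -> in_D' (z t).
Proof. intros Ht. apply (glob_in_M t Ht). Qed.

Lemma glob_lin_eventually_below aE aM aF aS T0 A δ : 0 <= T0 -> 0 < δ ->
  (forall t v, T0 < t -> admissible_velocity (z t) v ->
     lin aE aM aF aS v <= A - δ * lin aE aM aF aS (z t)) ->
  forall η, 0 < η -> exists T, forall t, T <= t -> lin aE aM aF aS (z t) <= A / δ + η.
Proof.
  intros HT0 Hδ Hrate. destruct (traj_velocity None z Hsol) as [Nt [HNt Hder]].
  apply (lip_eventually_below _ T0 Nt); auto.
  - intros b Hb. apply (sol_lin_lip X None); [exact Hsol | apply glob_dom | ]; lra.
  - intros t Ht HNt'. destruct (Hder t ltac:(lra) (glob_dom t ltac:(lra)) HNt') as [v [Hd Hv]].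
    exists (lin aE aM aF aS v). split; [apply sol_lin_deriv; auto | apply Hrate; auto].
Qed.

Lemma glob_E_no_uniform_decrease T0 γ : 0 <= T0 -> 0 < γ ->
  ~ (forall t v, T0 < t -> admissible_velocity (z t) v -> cE v <= - γ).
Proof.
  intros HT0 Hγ Hrate. destruct (traj_velocity None z Hsol) as [Nt [HNt Hder]].
  set (t1 := T0 + cE (z T0) / γ + 1).
  assert (HE0 : 0 <= cE (z T0)) by apply (glob_in_D' T0 HT0).
  assert (Ht1 : T0 + cE (z T0) / γ < t1) by (unfold t1; lra).
  assert (HE0' : 0 <= cE (z T0) / γ) by (apply Rle_mult_inv_pos; lra).
  assert (Hmono : cE (z t1) + γ * t1 <= cE (z T0) + γ * T0).
  { apply (lip_nonincreasing (fun s => cE (z s) + γ * s) T0 t1 Nt); auto; [lra | |].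
    - destruct (sol_coord_lip X None z T0 t1 Hsol (glob_dom t1 ltac:(lra)) ltac:(lra)) as [LE _].
      apply lip_on_plus; auto using lip_on_scal, lip_on_id.
    - intros t Ht HNt'. destruct (Hder t ltac:(lra) (glob_dom t ltac:(lra)) HNt') as [v [[DE _] Hv]].
      exists (cE v + γ * 1). split; [apply dpl_plus; [exact DE | apply dpl_scal, dpl_id] |].
      pose proof (Hrate t v ltac:(lra) Hv). lra. }
  pose proof (glob_in_D' t1 ltac:(lra)) as [HE1 _].
  assert (γ * (t1 - T0) > cE (z T0)).
  { replace (cE (z T0)) with (γ * (cE (z T0) / γ)) by (field; lra). apply Rmult_lt_compat_l; lra. }
  lra.
Qed.

Lemma glob_ratio_eventually_below mi q1 : 0 < mi ->
  (forall t, 0 <= t -> mi <= cM (z t)) ->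
  (forall η, 0 < η -> exists T, 0 <= T /\ forall t, T <= t -> cM (z t) <= mi + η) ->
  ds / (ds + g * la) < q1 < 1 ->
  exists T, 0 <= T /\ forall t, T <= t ->
    0 < cM (z t) + g * cMs (z t) /\ cM (z t) / (cM (z t) + g * cMs (z t)) <= q1.
Proof.
  intros Hmi Hlow Hnear Hq1.
  assert (Hla0 : 0 < la) by (pose proof kappa_lambda; pose proof kappa_pos; nra).
  assert (Hqs : 0 < ds / (ds + g * la)) by (apply Rdiv_lt_0_compat; nra).
  assert (Hmarg : mi * (1 - q1) < q1 * g * (la * mi / ds)).
  { assert (ds < q1 * (ds + g * la)).
    { destruct Hq1 as [Hq1 _]. apply (Rmult_lt_compat_r (ds + g * la)) in Hq1; [| nra].
      replace (ds / (ds + g * la) * (ds + g * la)) with ds in Hq1 by (field; nra). lra. }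
    apply (Rmult_lt_reg_r ds); auto.
    replace (q1 * g * (la * mi / ds) * ds) with (q1 * g * la * mi) by (field; lra). nra. }
  destruct (ratio_below_near g q1 mi (la * mi / ds) Hg Hmi ltac:(lra) Hmarg) as [η [Hη Hratio]].
  destruct (Hnear η Hη) as [TM [HTM HM]].
  (* [(- Ms)' = ds Ms - la M <= - la mi - ds (- Ms)] *)
  destruct (glob_lin_eventually_below 0 0 0 (-1) 0 (- (la * mi)) ds ltac:(lra) Hds) with (η := η)
    as [TS HS]; auto.
  { intros t v Ht [_ [_ [HvS _]]]. unfold lin in *. rewrite HvS. unfold Xcl; cbn [cMs].
    pose proof (Hlow t ltac:(lra)). assert (la * mi <= la * cM (z t)) by (apply Rmult_le_compat_l; lra).
    lra. }
  exists (Rmax (Rmax TM TS) 0). split; [apply Rmax_r |]. intros t Ht.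
  pose proof (Rmax_l (Rmax TM TS) 0). pose proof (Rmax_r (Rmax TM TS) 0).
  pose proof (Rmax_l TM TS). pose proof (Rmax_r TM TS).
  apply Hratio.
  - pose proof (glob_in_D' t ltac:(lra)) as [_ [HMt _]]. split; auto. apply HM. lra.
  - pose proof (HS t ltac:(lra)) as HSt. unfold lin in HSt.
    replace (- (la * mi) / ds) with (- (la * mi / ds)) in HSt by (field; lra). lra.
Qed.

Lemma glob_F_eventually_below T0 B : 0 <= T0 ->
  (forall t, T0 <= t -> 0 < cM (z t) + g * cMs (z t) /\
     cE (z t) * (cM (z t) / (cM (z t) + g * cMs (z t))) <= B) ->
  forall η, 0 < η -> exists T, forall t, T <= t -> cF (z t) <= nu * nE * B / dF + η.
Proof.
  intros HT0 HB η Hη.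
  destruct (glob_lin_eventually_below 0 0 1 0 T0 (nu * nE * B) dF HT0 HdF) with (η := η)
    as [T HT]; auto.
  - intros t v Ht [_ [_ [_ [_ Hclass]]]]. destruct (HB t ltac:(lra)) as [Hs HEq].
    specialize (Hclass Hs). unfold Xcl in Hclass; cbn [cF] in Hclass. unfold lin.
    assert (nu * nE * (cE (z t) * (cM (z t) / (cM (z t) + g * cMs (z t)))) <= nu * nE * B)
      by (apply Rmult_le_compat_l; nra).
    lra.
  - exists T. intros t Ht. pose proof (HT t Ht) as H. unfold lin in H. lra.
Qed.

Lemma E_rate_low_females w e η q1 : in_D' w -> e <= cE w ->
  cF w <= nu * nE * ((e + η) * q1) / dF + η ->
  cE (X w) <= - (nE + dE) * e * (1 - q1 * ((kap + g) / kap)) + η * ((nE + dE) * (q1 * ((kap + g) / kap)) + bE).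
Proof.
  intros [HE [_ [HF _]]] He HFw. pose proof kappa_pos.
  assert (Hrep : bE * nu * nE / dF = (nE + dE) * ((kap + g) / kap)).
  { apply (Rmult_eq_reg_r (dF * kap)); [| nra].
    replace (bE * nu * nE / dF * (dF * kap)) with (bE * nu * nE * kap) by (field; lra).
    rewrite kappa_identity. field. lra. }
  unfold Xcl; cbn [cE].
  assert (bE * cF w * (1 - cE w / K) <= bE * cF w).
  { assert (0 <= bE * cF w * (cE w / K))
      by (apply Rmult_le_pos; [nra | apply Rle_mult_inv_pos; lra]).
    replace (bE * cF w * (1 - cE w / K)) with (bE * cF w - bE * cF w * (cE w / K)) by ring. lra. }
  assert (bE * cF w <= bE * (nu * nE * ((e + η) * q1) / dF + η)) by (apply Rmult_le_compat_l; lra).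
  replace (bE * (nu * nE * ((e + η) * q1) / dF + η))
    with (bE * nu * nE / dF * ((e + η) * q1) + bE * η) in H1 by (field; lra).
  rewrite Hrep in H1. nra.
Qed.

(* Through [(1 - nu) nE E <= dM M], a positive lower bound of [E] bounds [M] below. *)
Lemma glob_M_lower_bound e : (forall t, 0 <= t -> e <= cE (z t)) ->
  forall t, 0 <= t -> (1 - nu) * nE * e / dM <= cM (z t).
Proof.
  intros HeL t Ht. destruct (glob_in_M t Ht) as [_ [_ [_ T3]]]. pose proof (HeL t Ht).
  apply (Rmult_le_reg_r dM); auto.
  replace ((1 - nu) * nE * e / dM * dM) with ((1 - nu) * nE * e) by (field; lra).
  assert ((1 - nu) * nE * e <= (1 - nu) * nE * cE (z t)) by (apply Rmult_le_compat_l; nra). lra.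
Qed.

Lemma glob_E_tends_to_zero η : 0 < η -> exists T, forall t, T <= t -> cE (z t) <= η.
Proof.
  intros Hη.
  destruct (nonincreasing_limit (fun t => cE (z t)) (fun t Ht => proj1 (glob_in_D' t Ht))
    (fun t1 t2 H12 => traj_E_nonincreasing None z Hsol Hz0 t1 t2 H12 (glob_dom t2 ltac:(lra))))
    as [e [He0 [HeL [_ HeT]]]].
  enough (He : e <= 0).
  { destruct (HeT η Hη) as [T [_ HT]]. exists T. intros t Ht. pose proof (HT t Ht). lra. }
  apply Rnot_gt_le. intro Hep.
  destruct (nonincreasing_limit (fun t => cM (z t)) (fun t Ht => proj1 (proj2 (glob_in_D' t Ht)))
    (fun t1 t2 H12 => traj_M_nonincreasing None z Hsol Hz0 t1 t2 H12 (glob_dom t2 ltac:(lra))))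
    as [mi [_ [HmiL [HmiG HmiT]]]].
  assert (Hmi : 0 < mi).
  { assert (0 < (1 - nu) * nE * e / dM) by (apply Rdiv_lt_0_compat; [repeat apply Rmult_lt_0_compat |]; lra).
    enough ((1 - nu) * nE * e / dM <= mi) by lra. apply HmiG, glob_M_lower_bound, HeL. }
  (* a ratio level [q1] strictly between the limiting ratio and the threshold [Q] *)
  pose proof kappa_pos as Hk. pose proof threshold_ratio_gap as [[Hqs HqsQ] HQ1].
  set (Q := kap / (kap + g)) in *. set (q1 := (Q + ds / (ds + g * la)) / 2).
  assert (HQinv : q1 * ((kap + g) / kap) = q1 / Q) by (unfold Q; field; lra).
  assert (Hq1Q : 0 < q1 / Q < 1).
  { split; [apply Rdiv_lt_0_compat; unfold q1; lra |].
    apply (Rmult_lt_reg_r Q); [lra |]. replace (q1 / Q * Q) with q1 by (field; lra). unfold q1; lra. }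
  destruct (glob_ratio_eventually_below mi q1 Hmi HmiL HmiT ltac:(unfold q1; lra)) as [T1 [HT1 Hratio]].
  (* the resulting uniform decay rate [gap] of E, and a margin η' keeping half of it *)
  set (gap := (nE + dE) * e * (1 - q1 / Q)).
  assert (Hgap : 0 < gap) by (unfold gap; apply Rmult_lt_0_compat; [nra | lra]).
  set (D := (nE + dE) * (q1 / Q) + bE).
  assert (HD : 0 < D) by (unfold D; nra).
  set (η' := gap / (2 * D)).
  assert (Hη' : 0 < η') by (apply Rdiv_lt_0_compat; lra).
  destruct (HeT η' Hη') as [TE [HTE HE]].
  set (T2 := Rmax T1 TE).
  assert (HT2 : T1 <= T2 /\ TE <= T2) by (split; [apply Rmax_l | apply Rmax_r]).
  destruct (glob_F_eventually_below T2 ((e + η') * q1) ltac:(lra)) with (η := η') as [TF HF]; auto.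
  { intros t Ht. destruct (Hratio t ltac:(lra)) as [Hs Hq]. split; auto.
    pose proof (glob_in_D' t ltac:(lra)) as [HEt _]. pose proof (HE t ltac:(lra)).
    apply Rmult_le_compat; auto. apply Rle_mult_inv_pos; [apply (glob_in_D' t); lra | auto]. }
  apply (glob_E_no_uniform_decrease (Rmax T2 TF) (gap / 2)); [pose proof (Rmax_l T2 TF); lra | lra |].
  intros t v Ht [HvE _]. pose proof (Rmax_l T2 TF). pose proof (Rmax_r T2 TF).
  rewrite HvE. eapply Rle_trans.
  - apply (E_rate_low_females (z t) e η' q1); [apply glob_in_D'; lra | apply HeL; lra | apply HF; lra].
  - rewrite !HQinv. fold gap D. replace (η' * D) with (gap / 2) by (unfold η'; field; lra).
    unfold gap. lra.
Qed.

Lemma glob_males_eventually_small η TE : 0 < η -> (forall t, TE <= t -> cE (z t) <= η) ->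
  exists T, forall t, T <= t ->
    cM (z t) <= ((1 - nu) * nE / dM + 1) * η /\
    cMs (z t) <= (la * ((1 - nu) * nE / dM + 1) / ds + 1) * η.
Proof.
  intros Hη HE. pose proof kappa_pos. pose proof kappa_lambda.
  assert (Hla0 : 0 < la) by nra.
  set (cM' := (1 - nu) * nE / dM + 1).
  set (T0 := Rmax TE 0).
  assert (HT0 : TE <= T0 /\ 0 <= T0) by (split; [apply Rmax_l | apply Rmax_r]).
  (* [M' <= (1 - nu) nE η - dM M] from T0 on *)
  destruct (glob_lin_eventually_below 0 1 0 0 T0 ((1 - nu) * nE * η) dM ltac:(lra) HdM) with (η := η)
    as [TM HM]; auto.
  { intros t v Ht [_ [HvM _]]. unfold lin. rewrite HvM. unfold Xcl; cbn [cM].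
    pose proof (HE t ltac:(lra)).
    assert ((1 - nu) * nE * cE (z t) <= (1 - nu) * nE * η) by (apply Rmult_le_compat_l; nra). lra. }
  assert (HM' : forall t, TM <= t -> cM (z t) <= cM' * η).
  { intros t Ht. pose proof (HM t Ht) as HMt. unfold lin in HMt.
    replace (cM' * η) with ((1 - nu) * nE * η / dM + η) by (unfold cM'; field; lra). lra. }
  set (T1 := Rmax T0 TM).
  assert (HT1 : T0 <= T1 /\ TM <= T1) by (split; [apply Rmax_l | apply Rmax_r]).
  (* [Ms' <= la cM' η - ds Ms] from T1 on *)
  destruct (glob_lin_eventually_below 0 0 0 1 T1 (la * (cM' * η)) ds ltac:(lra) Hds) with (η := η)
    as [TS HS]; auto.
  { intros t v Ht [_ [_ [HvS _]]]. unfold lin. rewrite HvS. unfold Xcl; cbn [cMs].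
    pose proof (HM' t ltac:(lra)).
    assert (la * cM (z t) <= la * (cM' * η)) by (apply Rmult_le_compat_l; lra). lra. }
  exists (Rmax T1 TS). intros t Ht. pose proof (Rmax_l T1 TS). pose proof (Rmax_r T1 TS).
  split; [apply HM'; lra |].
  pose proof (HS t ltac:(lra)) as HSt. unfold lin in HSt.
  replace ((la * cM' / ds + 1) * η) with (la * (cM' * η) / ds + η) by (field; lra). lra.
Qed.

Lemma glob_converges eps : 0 < eps -> exists T, forall t, T <= t -> vnorm (z t) < eps.
Proof.
  intros Heps. pose proof kappa_pos. pose proof kappa_lambda.
  assert (Hla0 : 0 < la) by nra.
  set (cM' := (1 - nu) * nE / dM + 1). set (cS := la * cM' / ds + 1). set (cF' := 2 * (nE + dE) / bE).
  assert (HcM : 0 < cM') by (unfold cM'; assert (0 < (1 - nu) * nE / dM) by (apply Rdiv_lt_0_compat; nra); lra).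
  assert (HcS : 0 < cS) by (unfold cS; assert (0 < la * cM' / ds) by (apply Rdiv_lt_0_compat; nra); lra).
  assert (HcF : 0 < cF') by (apply Rdiv_lt_0_compat; lra).
  set (C := 1 + cF' + cM' + cS).
  set (η := Rmin (K / 2) (eps / (2 * C))).
  assert (Hη : 0 < η) by (apply Rmin_glb_lt; [lra | apply Rdiv_lt_0_compat; unfold C; lra]).
  assert (HηK : η <= K / 2) by apply Rmin_l.
  assert (HCη : C * η <= eps / 2).
  { replace (eps / 2) with (C * (eps / (2 * C))) by (field; unfold C; lra).
    apply Rmult_le_compat_l; [unfold C; lra | apply Rmin_r]. }
  destruct (glob_E_tends_to_zero η Hη) as [TE HE].
  destruct (glob_males_eventually_small η TE Hη HE) as [TMS HMS].
  exists (Rmax (Rmax TE TMS) 0). intros t Ht.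
  pose proof (Rmax_l (Rmax TE TMS) 0). pose proof (Rmax_r (Rmax TE TMS) 0).
  pose proof (Rmax_l TE TMS). pose proof (Rmax_r TE TMS).
  pose proof (glob_in_D' t ltac:(lra)) as [Et [Mt [Ft St]]].
  pose proof (HE t ltac:(lra)) as BE. destruct (HMS t ltac:(lra)) as [BM BS].
  assert (BF : cF (z t) <= cF' * η).
  { eapply Rle_trans; [apply Mset_F_bound; [apply glob_in_M | ]; lra |].
    apply Rmult_le_compat_l; lra. }
  eapply Rle_lt_trans; [apply vnorm_le_l1 |].
  rewrite !Rabs_right by lra. fold cM' cS in BM, BS. unfold C in HCη. lra.
Qed.

End GlobalTrajectory.

End Model.

Theorem theorem7
  (betaE nuE deltaE deltaM deltaF deltas K nu gammas lambda : R)
  (HbetaE : 0 < betaE) (HnuE : 0 < nuE) (HdeltaE : 0 < deltaE)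
  (HdeltaM : 0 < deltaM) (HdeltaF : 0 < deltaF) (Hdeltas : 0 < deltas)
  (HK : 0 < K) (Hnu : 0 < nu < 1) (Hgammas : 0 < gammas <= 1)
  (HdsdM : deltaM <= deltas)
  (HR0 : 1 < calR0 betaE nuE deltaE deltaF nu)
  (Hlambda : (betaE * nu * nuE - (nuE + deltaE) * deltaF) * deltas
             / (gammas * (nuE + deltaE) * deltaF) < lambda) :
  let X := Xcl betaE nuE deltaE deltaM deltaF deltas K nu gammas lambda in
  let M := Mset betaE nuE deltaE deltaM K nu
             (kappa_bar betaE nuE deltaE deltaF nu gammas) in
  pos_invariant X M /\ GAS_in X M.
Proof.
  intros X M. subst X M. assert (Hg : 0 < gammas) by lra.
  split; [| split].
  -
    intros Tmax z Hsol Hz0 t Ht. eapply (traj_in_M betaE nuE deltaE deltaM deltaF deltas K nu gammas lambda); eassumption.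
  -
    intros eps Heps. eapply (stability betaE nuE deltaE deltaM deltaF deltas K nu gammas lambda); eassumption.
  -
    intros z Hsol Hz0 eps Heps. eapply (glob_converges betaE nuE deltaE deltaM deltaF deltas K nu gammas lambda); eassumption.
Qed.
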